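(* For every $\varepsilon\in(0,R)$, the approximate solution $u_\varepsilon$ satisfies $$u^*\ge u_\varepsilon\ge u^*-v\qquad\text{in }\Omega_\varepsilon\times(0,\infty).$$
   Context: Standing setting: $n\ge2$, $0<R<\sqrt{\tfrac38(3n-5)(2n-3)^3}$; $B_\rho=\{x\in\mathbb R^n:|x|<\rho\}$; radial functions written in $r=|x|$, subscript $r$ = radial derivative. $\alpha:=\sqrt[3]{9n-15}$, $u^*(r):=-\alpha r^{1/3}$, $\nu:=\tfrac16\sqrt{36n^2-96n+61}$, $J_\nu$ the Bessel function of the first kind of order $\nu$, $x_0,x_1$ the first positive roots of $J_\nu$, $J_\nu'$. $u_0$ satisfies: (C1) $u_0\in C^2(\overline{B_R}\setminus\{0\})$; (C2) radially symmetric; (C3) $u^*\ge u_0$; (C4) $\limsup_{r\searrow0}|r^{\frac32-n-\nu}(u^*(r)-u_0(r))|<\infty$; (C5) $u_0(R)=u^*(R)$; (C6) there is $C>0$ with $0\ge u_{0r}(r)\ge -Cr^{-2/3}$ on $(0,R)$. Fix $\lambda>0$ with $\lambda R<x_1$ and $C>0$ such that $v(r,t):=Ce^{-\lambda^2t}r^{n-\frac32}J_\nu(\lambda r)$ satisfies $u_0\ge u^*-v(\cdot,0)$ in $B_R$. For $\varepsilon\in(0,R)$ let $\Omega_\varepsilon:=B_R\setminus\overline{B_\varepsilon}$ and let $u_{0\varepsilon}\in C^2(\overline{\Omega_\varepsilon})$ be radially symmetric with: $u_{0\varepsilon}(\varepsilon)=u^*(\varepsilon)-v(\varepsilon,0)$;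 $u_{0r}\le u_{0\varepsilon r}\le0$; $u^*\ge u_{0\varepsilon}\ge u^*-v(\cdot,0)$; and $u_{0\varepsilon}=u_0$ on $\{r\in(\varepsilon,R]:u_0(r)<u^*(\varepsilon)-v(\varepsilon,0)-\varepsilon\}$. Let $c_v:=-e^{\lambda^2t}v(\varepsilon,t)$ (independent of $t$) and choose $c^*_\varepsilon>1$ with $c^*_\varepsilon>\sup_{[\varepsilon,R]}|u^*_r|$, $c^*_\varepsilon>\sup_{[\varepsilon,R]}|(u^*-v(\cdot,0))_r|$, $c^*_\varepsilon>\sup_{[\varepsilon,R]}|u_{0\varepsilon r}|$, and $c_v+\frac{n-1}{\varepsilon}c^*_\varepsilon+u^*(\varepsilon)(c^*_\varepsilon)^3\le0$. Let $f_\varepsilon\in C_c^\infty(\mathbb R)$ with $f_\varepsilon(s)=s^3$ for $|s|\le c^*_\varepsilon$ and $f_\varepsilon\le0$ on $(-\infty,0)$. The approximate solution $u_\varepsilon$ is the unique radially symmetric solution, with $u_\varepsilon\in C^{\beta,\beta/2}(\overline{\Omega_\varepsilon}\times[0,\infty))\cap C^{2+\beta,1+\beta/2}(\Omega_\varepsilon\times(0,\infty))$ for some $\beta\in(0,1)$ and $\nabla u_\varepsilon\in L^\infty_{loc}(\overline{\Omega_\varepsilon}\times[0,\infty))$, of $u_{\varepsilon t}=\Delta u_\varepsilon+u_\varepsilon f_\varepsilon(u_{\varepsilon r})$ in $\Omega_\varepsilon\times(0,\infty)$, $u_\varepsilon(\varepsilon,t)=u^*(\varepsilon)-v(\varepsilon,t)$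 and $u_\varepsilon(R,t)=u^*(R)$ for $t>0$, $u_\varepsilon(\cdot,0)=u_{0\varepsilon}$ in $\overline{\Omega_\varepsilon}$. *)

From Stdlib Require Import Arith Reals Lra ClassicalEpsilon.
Open Scope R_scope.

(* x^a for x >= 0 with the convention 0^a = 0 (used only with a > 0 or x > 0). *)
Definition pw (x a : R) : R := if Rlt_dec 0 x then Rpower x a else 0.

(* limit of a real sequence (chosen classically; meaningful when it converges) *)
Definition lim_seq (u : nat -> R) : R :=
  epsilon (inhabits 0) (fun l => Un_cv u l).

Fixpoint rprod (z : R) (k : nat) : R :=
  match k with
  | O => z
  | S k' => rprod z k' * (z + INR (S k'))
  end.

(* Gamma function via Gauss' limit formula (for z > 0) *)
Definition Gamma (z : R) : R :=
  lim_seq (fun k => INR (fact k) * Rpower (INR k) z / rprod z k).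

Definition BesselJ (nu x : R) : R :=
  lim_seq (fun N => sum_f_R0
    (fun m => (-1) ^ m / (INR (fact m) * Gamma (INR m + nu + 1))
              * pw (x / 2) (2 * INR m + nu)) N).

Definition alpha (n : nat) : R := Rpower (9 * INR n - 15) (1 / 3).
Definition ustar (n : nat) (r : R) : R := - alpha n * pw r (1 / 3).
Definition nu (n : nat) : R := sqrt (36 * INR n ^ 2 - 96 * INR n + 61) / 6.

Definition vfun (n : nat) (lam C r t : R) : R :=
  C * exp (- lam ^ 2 * t) * pw r (INR n - 3 / 2) * BesselJ (nu n) (lam * r).

Definition cont_on (D : R -> Prop) (f : R -> R) : Prop :=
  forall x, D x -> forall e, 0 < e -> exists d, 0 < d /\
    forall y, D y -> Rabs (y - x) < d -> Rabs (f y - f x) < e.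

Definition cont_on2 (D : R -> R -> Prop) (u : R -> R -> R) : Prop :=
  forall r t, D r t -> forall e, 0 < e -> exists d, 0 < d /\
    forall s tau, D s tau -> Rabs (s - r) < d -> Rabs (tau - t) < d ->
      Rabs (u s tau - u r t) < e.

Definition holder2 (D : R -> R -> Prop) (beta : R) (u : R -> R -> R) : Prop :=
  exists K, forall r t s tau, D r t -> D s tau ->
    Rabs (u r t - u s tau) <= K * (pw (Rabs (r - s)) beta + pw (Rabs (t - tau)) (beta / 2)).

Definition smooth (f : R -> R) : Prop :=
  exists F : nat -> R -> R, F O = f /\
    forall k x, derivable_pt_lim (F k) x (F (S k) x).

(* [ustar] is a stationary solution of [u_t = u_rr + (n-1)/r u_r + u u_r^3], and
   [ustar - v], [v = exp (-lam^2 t) Cv r^(n-3/2) J_nu (lam r)], is a subsolution: [v] solves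
   the linearisation of the stationary equation at [ustar] with eigenvalue [lam^2] (a Bessel
   equation of order [nu]), and the cubic remainder has a sign because [ustar, ustar' < 0]
   while [v, v_r > 0] for [lam r < x1]. Both gradients stay below [c*_eps], where [f_eps] is
   the cube, so a weak minimum principle for [w_t >= w_rr + K w] at critical points compares
   them with [u_eps], given the ordering of boundary and initial data. The positivity of
   [J_nu] and [J_nu'] on [(0, x1)] comes from the power series of [J_nu] near [0]; the
   recurrence of its coefficients needs [Gamma (z + 1) = z Gamma z], derived from Gauss's
   limit formula. *)

From Stdlib Require Import Arith Reals Lra Lia ClassicalEpsilon.
From Coquelicot Require Import Coquelicot.
Open Scope R_scope.

Lemma Rpower_pos x a : 0 < Rpower x a.
Proof. apply exp_pos. Qed.

Lemma pw_pos x a : 0 < x -> pw x a = Rpower x a.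
Proof. intros; unfold pw; destruct Rlt_dec; [reflexivity | lra]. Qed.

Lemma pw_nonneg x a : 0 <= pw x a.
Proof. unfold pw; destruct Rlt_dec; [left; apply Rpower_pos | lra]. Qed.

Lemma pw_small a e : 0 < a -> 0 < e ->
  exists d, 0 < d /\ forall x, 0 <= x < d -> pw x a < e.
Proof.
  intros Ha He. exists (Rpower e (/ a)). split; [apply Rpower_pos|].
  intros x [Hx0 Hx]. unfold pw. destruct Rlt_dec; [|lra].
  apply Rlt_le_trans with (Rpower (Rpower e (/ a)) a); [apply Rlt_Rpower_l; auto|].
  rewrite Rpower_mult. replace (/ a * a) with 1 by (field; lra). rewrite Rpower_1; lra.
Qed.

Definition clamp (a b x : R) : R := Rmax a (Rmin b x).

Lemma clamp_in a b x : a <= b -> a <= clamp a b x <= b.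
Proof. intros; unfold clamp, Rmax, Rmin; repeat destruct Rle_dec; lra. Qed.

Lemma clamp_id a b x : a <= x <= b -> clamp a b x = x.
Proof. intros; unfold clamp, Rmax, Rmin; repeat destruct Rle_dec; lra. Qed.

Lemma clamp_lipschitz a b x y : a <= b ->
  Rabs (clamp a b x - clamp a b y) <= Rabs (x - y).
Proof.
  intros; unfold clamp, Rmax, Rmin; repeat destruct Rle_dec;
  unfold Rabs; repeat destruct Rcase_abs; lra.
Qed.

(* Composing with [clamp] turns continuity on [[a, b]] into the global continuity
   required by [continuity_ab_min]. *)
Lemma cont_on_interval_min (g : R -> R) a b : a <= b ->
  cont_on (fun x => a <= x <= b) g ->
  exists x0, a <= x0 <= b /\ forall x, a <= x <= b -> g x0 <= g x.
Proof.
  intros Hab Hg.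
  destruct (continuity_ab_min (fun x => g (clamp a b x)) a b Hab) as [m [Hm Hma]].
  - intros c _ e He; simpl; unfold R_dist.
    destruct (Hg (clamp a b c) (clamp_in a b c Hab) e He) as [d [Hd Hgd]].
    exists d; split; [lra|]. intros y [_ Hy].
    apply Hgd; [apply clamp_in; lra|].
    eapply Rle_lt_trans; [apply clamp_lipschitz; lra | exact Hy].
  - exists m; split; [exact Hma|]. intros x Hx.
    specialize (Hm x Hx). rewrite !clamp_id in Hm; lra.
Qed.

Definition unif_cont_rect (a b c d : R) (F : R -> R -> R) : Prop :=
  forall e, 0 < e -> exists dl, 0 < dl /\ forall r s t tau,
    a <= r <= b -> a <= s <= b -> c <= t <= d -> c <= tau <= d ->
    Rabs (r - s) < dl -> Rabs (t - tau) < dl -> Rabs (F r t - F s tau) < e.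

Section UnifContRect.
Variables a b c d : R.
Hypotheses (Hab : a <= b) (Hcd : c <= d).

Lemma unif_cont_rect_min F : unif_cont_rect a b c d F ->
  exists r0 t0, a <= r0 <= b /\ c <= t0 <= d /\
    forall r t, a <= r <= b -> c <= t <= d -> F r0 t0 <= F r t.
Proof.
  intros HF.
  assert (Hslice : forall t, c <= t <= d -> exists x0, a <= x0 <= b /\
     forall x, a <= x <= b -> F x0 t <= F x t).
  { intros t Ht. apply cont_on_interval_min; auto. intros x Hx e He.
    destruct (HF e He) as [dl [Hdl H]]. exists dl; split; auto.
    intros y Hy Hyx. apply H; auto. rewrite Rminus_diag, Rabs_R0; lra. }
  (* [argmin t] minimises the slice [F _ t]; [F (argmin t) t] is then continuous in [t]. *)
  set (argmin := fun t => match excluded_middle_informative (c <= t <= d) with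
     | left H => proj1_sig (constructive_indefinite_description _ (Hslice t H))
     | right _ => a end).
  assert (Hargmin : forall t, c <= t <= d -> a <= argmin t <= b /\
     forall x, a <= x <= b -> F (argmin t) t <= F x t).
  { intros t Ht. unfold argmin. destruct excluded_middle_informative; [|contradiction].
    destruct constructive_indefinite_description as [x0 Hx0]; exact Hx0. }
  destruct (cont_on_interval_min (fun t => F (argmin t) t) c d Hcd) as [t0 [Ht0 Hmin]].
  - intros t Ht e He. destruct (HF (e/2) ltac:(lra)) as [dl [Hdl H]].
    exists dl; split; auto. intros y Hy Hyt.
    destruct (Hargmin t Ht) as [Ht1 Ht2], (Hargmin y Hy) as [Hy1 Hy2].
    assert (A1 := Ht2 (argmin y) Hy1). assert (A2 := Hy2 (argmin t) Ht1).
    assert (B1 : Rabs (F (argmin y) y - F (argmin y) t) < e/2).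
    { apply H; auto. rewrite Rminus_diag, Rabs_R0; lra. }
    assert (B2 : Rabs (F (argmin t) y - F (argmin t) t) < e/2).
    { apply H; auto. rewrite Rminus_diag, Rabs_R0; lra. }
    revert B1 B2; unfold Rabs; repeat destruct Rcase_abs; lra.
  - exists (argmin t0), t0. destruct (Hargmin t0 Ht0) as [H1 _].
    do 2 (split; auto). intros r t Hr Ht.
    eapply Rle_trans; [apply (Hmin t Ht)|]. apply (proj2 (Hargmin t Ht)); auto.
Qed.

Lemma unif_cont_rect_opp F : unif_cont_rect a b c d F ->
  unif_cont_rect a b c d (fun r t => - F r t).
Proof.
  intros HF e He. destruct (HF e He) as [dl [Hdl H]]. exists dl; split; auto.
  intros. replace (- F r t - - F s tau) with (- (F r t - F s tau)) by ring.
  rewrite Rabs_Ropp; auto.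
Qed.

Lemma unif_cont_rect_bounded F : unif_cont_rect a b c d F ->
  exists M, forall r t, a <= r <= b -> c <= t <= d -> Rabs (F r t) <= M.
Proof.
  intros HF.
  destruct (unif_cont_rect_min F HF) as [r0 [t0 [_ [_ H0]]]].
  destruct (unif_cont_rect_min _ (unif_cont_rect_opp F HF)) as [r1 [t1 [_ [_ H1]]]].
  exists (Rabs (F r0 t0) + Rabs (F r1 t1)). intros r t Hr Ht.
  specialize (H0 r t Hr Ht). specialize (H1 r t Hr Ht).
  unfold Rabs; repeat destruct Rcase_abs; lra.
Qed.

Lemma unif_cont_rect_plus F G : unif_cont_rect a b c d F -> unif_cont_rect a b c d G ->
  unif_cont_rect a b c d (fun r t => F r t + G r t).
Proof.
  intros HF HG e He. destruct (HF (e/2) ltac:(lra)) as [d1 [Hd1 H1]].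
  destruct (HG (e/2) ltac:(lra)) as [d2 [Hd2 H2]].
  exists (Rmin d1 d2); split; [apply Rmin_pos; auto|]. intros r s t tau Hr Hs Ht Htau Hrs Htt.
  pose proof (Rmin_l d1 d2); pose proof (Rmin_r d1 d2).
  specialize (H1 r s t tau Hr Hs Ht Htau ltac:(lra) ltac:(lra)).
  specialize (H2 r s t tau Hr Hs Ht Htau ltac:(lra) ltac:(lra)).
  revert H1 H2; unfold Rabs; repeat destruct Rcase_abs; lra.
Qed.

Lemma unif_cont_rect_minus F G : unif_cont_rect a b c d F -> unif_cont_rect a b c d G ->
  unif_cont_rect a b c d (fun r t => F r t - G r t).
Proof. intros HF HG; apply unif_cont_rect_plus, unif_cont_rect_opp; assumption. Qed.

Lemma unif_cont_rect_mult F G : unif_cont_rect a b c d F -> unif_cont_rect a b c d G ->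
  unif_cont_rect a b c d (fun r t => F r t * G r t).
Proof.
  intros HF HG.
  destruct (unif_cont_rect_bounded F HF) as [MF HMF].
  destruct (unif_cont_rect_bounded G HG) as [MG HMG].
  set (MF' := Rabs MF + 1). set (MG' := Rabs MG + 1).
  assert (PF : 0 < MF') by (unfold MF'; pose proof (Rabs_pos MF); lra).
  assert (PG : 0 < MG') by (unfold MG'; pose proof (Rabs_pos MG); lra).
  intros e He.
  destruct (HF (e / (4 * MG')) ltac:(apply Rdiv_lt_0_compat; lra)) as [d1 [Hd1 H1]].
  destruct (HG (e / (4 * MF')) ltac:(apply Rdiv_lt_0_compat; lra)) as [d2 [Hd2 H2]].
  exists (Rmin d1 d2); split; [apply Rmin_pos; auto|]. intros r s t tau Hr Hs Ht Htau Hrs Htt.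
  pose proof (Rmin_l d1 d2); pose proof (Rmin_r d1 d2).
  specialize (H1 r s t tau Hr Hs Ht Htau ltac:(lra) ltac:(lra)).
  specialize (H2 r s t tau Hr Hs Ht Htau ltac:(lra) ltac:(lra)).
  assert (BG : Rabs (G r t) <= MG').
  { specialize (HMG r t Hr Ht); unfold MG'; pose proof (Rle_abs MG); lra. }
  assert (BF : Rabs (F s tau) <= MF').
  { specialize (HMF s tau Hs Htau); unfold MF'; pose proof (Rle_abs MF); lra. }
  replace (F r t * G r t - F s tau * G s tau) with
    ((F r t - F s tau) * G r t + F s tau * (G r t - G s tau)) by ring.
  eapply Rle_lt_trans; [apply Rabs_triang|]. rewrite !Rabs_mult.
  assert (Rabs (F r t - F s tau) * Rabs (G r t) <= e / (4 * MG') * MG')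
    by (apply Rmult_le_compat; try apply Rabs_pos; lra).
  assert (Rabs (F s tau) * Rabs (G r t - G s tau) <= MF' * (e / (4 * MF')))
    by (apply Rmult_le_compat; try apply Rabs_pos; lra).
  replace (e / (4 * MG') * MG') with (e / 4) in * by (field; lra).
  replace (MF' * (e / (4 * MF'))) with (e / 4) in * by (field; lra).
  lra.
Qed.

Lemma unif_cont_rect_ext F G : unif_cont_rect a b c d F ->
  (forall r t, a <= r <= b -> c <= t <= d -> F r t = G r t) -> unif_cont_rect a b c d G.
Proof.
  intros HF E e He. destruct (HF e He) as [dl [Hdl H]]. exists dl; split; auto.
  intros. rewrite <- !E; auto.
Qed.

Lemma unif_cont_rect_fst (g : R -> R) :
  (forall x, a <= x <= b -> continuity_pt g x) -> unif_cont_rect a b c d (fun r _ => g r).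
Proof.
  intros Hg e He.
  destruct (Heine g (fun x => a <= x <= b) (compact_P3 a b) Hg (mkposreal e He))
    as [[dl Hdl] H].
  exists dl; split; [exact Hdl|]. intros. apply H; auto.
Qed.

Lemma unif_cont_rect_snd (g : R -> R) :
  (forall x, c <= x <= d -> continuity_pt g x) -> unif_cont_rect a b c d (fun _ t => g t).
Proof.
  intros Hg e He.
  destruct (Heine g (fun x => c <= x <= d) (compact_P3 c d) Hg (mkposreal e He))
    as [[dl Hdl] H].
  exists dl; split; [exact Hdl|]. intros. apply H; auto.
Qed.

Lemma holder2_unif_cont_rect beta u : 0 < beta ->
  holder2 (fun r t => a <= r <= b /\ c <= t) beta u -> unif_cont_rect a b c d u.
Proof.
  intros Hb [K HK] e He.
  set (e' := e / (4 * (Rabs K + 1))).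
  assert (He' : 0 < e')
    by (unfold e'; apply Rdiv_lt_0_compat; [lra | pose proof (Rabs_pos K); lra]).
  destruct (pw_small beta e' Hb He') as [d1 [Hd1 H1]].
  destruct (pw_small (beta / 2) e' ltac:(lra) He') as [d2 [Hd2 H2]].
  exists (Rmin d1 d2); split; [apply Rmin_pos; auto|].
  intros r s t tau Hr Hs Ht Htau Hrs Htt.
  pose proof (Rmin_l d1 d2); pose proof (Rmin_r d1 d2).
  assert (P1 := H1 (Rabs (r - s)) ltac:(split; [apply Rabs_pos | lra])).
  assert (P2 := H2 (Rabs (t - tau)) ltac:(split; [apply Rabs_pos | lra])).
  pose proof (pw_nonneg (Rabs (r - s)) beta).
  pose proof (pw_nonneg (Rabs (t - tau)) (beta / 2)).
  eapply Rle_lt_trans; [exact (HK r t s tau ltac:(split; lra) ltac:(split; lra))|].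
  apply Rle_lt_trans with ((Rabs K + 1) * (2 * e')).
  - apply Rle_trans with (Rabs K * (pw (Rabs (r - s)) beta + pw (Rabs (t - tau)) (beta / 2))).
    + apply Rmult_le_compat_r; [lra | apply Rle_abs].
    + apply Rmult_le_compat; try lra. apply Rabs_pos.
  - unfold e'. replace ((Rabs K + 1) * (2 * (e / (4 * (Rabs K + 1))))) with (e / 2)
      by (field; pose proof (Rabs_pos K); lra).
    lra.
Qed.

End UnifContRect.

Lemma derivable_pt_lim_eq f x l1 l2 :
  l1 = l2 -> derivable_pt_lim f x l1 -> derivable_pt_lim f x l2.
Proof. intros ->; auto. Qed.

Lemma derivable_pt_lim_plus' f g x df dg : derivable_pt_lim f x df ->
  derivable_pt_lim g x dg -> derivable_pt_lim (fun t => f t + g t) x (df + dg).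
Proof. apply derivable_pt_lim_plus. Qed.

Lemma derivable_pt_lim_minus' f g x df dg : derivable_pt_lim f x df ->
  derivable_pt_lim g x dg -> derivable_pt_lim (fun t => f t - g t) x (df - dg).
Proof. apply derivable_pt_lim_minus. Qed.

Lemma derivable_pt_lim_mult' f g x df dg : derivable_pt_lim f x df ->
  derivable_pt_lim g x dg -> derivable_pt_lim (fun t => f t * g t) x (df * g x + f x * dg).
Proof. apply derivable_pt_lim_mult. Qed.

Lemma derivable_pt_lim_comp' f g x df dg : derivable_pt_lim f x df ->
  derivable_pt_lim g (f x) dg -> derivable_pt_lim (fun t => g (f t)) x (dg * df).
Proof. apply derivable_pt_lim_comp. Qed.

Lemma derivable_pt_lim_scal' k f x l :
  derivable_pt_lim f x l -> derivable_pt_lim (fun t => k * f t) x (k * l).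
Proof.
  intros. apply derivable_pt_lim_eq with (0 * f x + k * l); [ring|].
  apply derivable_pt_lim_mult'; [apply derivable_pt_lim_const | assumption].
Qed.

Lemma derivable_pt_lim_scal_id k x : derivable_pt_lim (fun t => k * t) x k.
Proof.
  apply derivable_pt_lim_eq with (k * 1); [ring|].
  apply derivable_pt_lim_scal', derivable_pt_lim_id.
Qed.

Lemma derivable_pt_lim_exp_scal k x :
  derivable_pt_lim (fun t => exp (k * t)) x (k * exp (k * x)).
Proof.
  apply derivable_pt_lim_eq with (exp (k * x) * k); [ring|].
  apply derivable_pt_lim_comp'; [apply derivable_pt_lim_scal_id | apply derivable_pt_lim_exp].
Qed.

Lemma derivable_pt_lim_inv_id x : x <> 0 -> derivable_pt_lim (fun t => / t) x (- / (x * x)).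
Proof.
  intros Hx. apply derivable_pt_lim_eq with ((0 * x - 1 * 1) / Rsqr x).
  { unfold Rsqr. field. auto. }
  apply (derivable_pt_lim_ext (fun t => 1 / t)); [intros; unfold Rdiv; ring|].
  apply (derivable_pt_lim_div (fun _ => 1) (fun t => t));
    [apply derivable_pt_lim_const | apply derivable_pt_lim_id | auto].
Qed.

Lemma derivable_pt_lim_Rpower_id c r : 0 < r ->
  derivable_pt_lim (fun x => Rpower x c) r (c * Rpower r c * / r).
Proof.
  intros Hr. apply derivable_pt_lim_eq with (c * Rpower r (c - 1)).
  - replace (Rpower r c) with (Rpower r (c - 1) * Rpower r 1)
      by (rewrite <- Rpower_plus; f_equal; ring).
    rewrite Rpower_1 by lra. field. lra.
  - apply derivable_pt_lim_power; auto.
Qed.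

Lemma derivable_pt_lim_continuity_pt f x l : derivable_pt_lim f x l -> continuity_pt f x.
Proof. intros D. apply derivable_continuous_pt. exists l. exact D. Qed.

Lemma interior_min_derivs (h h1 h2 : R -> R) a b r0 : a < r0 < b ->
  (forall r, a < r < b -> derivable_pt_lim h r (h1 r) /\ derivable_pt_lim h1 r (h2 r)) ->
  (forall r, a < r < b -> h r0 <= h r) -> h1 r0 = 0 /\ 0 <= h2 r0.
Proof.
  intros Hr0 Hd Hmin.
  assert (Hcrit : h1 r0 = 0).
  { destruct (Hd r0 Hr0) as [D _].
    assert (pr : derivable_pt h r0) by (exists (h1 r0); exact D).
    rewrite <- (derive_pt_eq_0 h r0 (h1 r0) pr D).
    apply (deriv_minimum h a b r0 pr); try lra. intros; apply Hmin; lra. }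
  split; auto.
  destruct (Rle_or_lt 0 (h2 r0)) as [|Hneg]; auto. exfalso.
  destruct (proj2 (Hd r0 Hr0) (- h2 r0 / 2) ltac:(lra)) as [[dl Hdl] Hx]. simpl in Hx.
  set (x := Rmin (dl/2) ((b - r0)/2)).
  assert (Hx0 : 0 < x) by (unfold x; apply Rmin_pos; lra).
  assert (Hxd : x < dl) by (unfold x; pose proof (Rmin_l (dl/2) ((b-r0)/2)); lra).
  assert (Hxb : x < b - r0) by (unfold x; pose proof (Rmin_r (dl/2) ((b-r0)/2)); lra).
  (* [h1 < 0] right of [r0] since [h2 r0 < 0], so [h] decreases there. *)
  assert (Hdecr : forall y, 0 < y <= x -> h1 (r0 + y) < 0).
  { intros y Hy. assert (A := Hx y ltac:(lra) ltac:(rewrite Rabs_right; lra)).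
    rewrite Hcrit, Rminus_0_r in A.
    assert (B : h1 (r0 + y) / y < 0) by (revert A; unfold Rabs; destruct Rcase_abs; lra).
    destruct (Rle_or_lt 0 (h1 (r0 + y))) as [C|C]; auto.
    assert (0 <= h1 (r0 + y) / y) by (apply Rdiv_le_0_compat; lra). lra. }
  destruct (MVT_cor2 h h1 r0 (r0 + x)) as [c [Hc1 Hc2]]; [lra | intros; apply Hd; lra |].
  assert (h1 c < 0) by (replace c with (r0 + (c - r0)) by ring; apply Hdecr; lra).
  assert (h1 c * (r0 + x - r0) < 0) by (apply Rmult_neg_pos; lra).
  assert (h r0 <= h (r0 + x)) by (apply Hmin; lra). lra.
Qed.

Lemma left_min_deriv_nonpos (p : R -> R) l t0 eta : 0 < eta ->
  derivable_pt_lim p t0 l -> (forall t, t0 - eta < t < t0 -> p t0 <= p t) -> l <= 0.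
Proof.
  intros He D Hm. destruct (Rle_or_lt l 0) as [|Hl]; auto. exfalso.
  destruct (D (l/2) ltac:(lra)) as [[dl Hdl] Hx]. simpl in Hx.
  set (y := - Rmin (dl/2) (eta/2)).
  assert (Hy : 0 < Rmin (dl/2) (eta/2)) by (apply Rmin_pos; lra).
  pose proof (Rmin_l (dl/2) (eta/2)); pose proof (Rmin_r (dl/2) (eta/2)).
  assert (A := Hx y ltac:(unfold y; lra) ltac:(unfold y; rewrite Rabs_Ropp, Rabs_right; lra)).
  assert (B : (p (t0 + y) - p t0) / y > 0) by (revert A; unfold Rabs; destruct Rcase_abs; lra).
  assert (C : p t0 <= p (t0 + y)) by (apply Hm; unfold y; lra).
  assert ((p (t0 + y) - p t0) / y <= 0).
  { unfold Rdiv. rewrite <- (Rmult_0_r (p (t0 + y) - p t0)).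
    apply Rmult_le_compat_l; [lra|]. left; apply Rinv_lt_0_compat; unfold y; lra. }
  lra.
Qed.

Section MinPrinciple.
Variables (w wr wrr wt : R -> R -> R) (a b T K : R).
Hypotheses (Hab : a < b) (HT : 0 < T).
Hypothesis Hw : unif_cont_rect a b 0 T w.
Hypothesis Hderiv : forall r t, a < r < b -> 0 < t <= T ->
  derivable_pt_lim (fun s => w s t) r (wr r t) /\
  derivable_pt_lim (fun s => wr s t) r (wrr r t) /\
  derivable_pt_lim (fun s => w r s) t (wt r t).
Hypothesis Hsuper : forall r t, a < r < b -> 0 < t <= T -> wr r t = 0 -> w r t < 0 ->
  wt r t >= wrr r t + K * w r t.
Hypothesis Hbound : forall t, 0 <= t <= T -> w a t >= 0 /\ w b t >= 0.
Hypothesis Hinit : forall r, a <= r <= b -> w r 0 >= 0.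

Let penalized dl r t := exp (- K * t) * w r t + dl * t.

Lemma penalized_unif_cont dl : unif_cont_rect a b 0 T (penalized dl).
Proof.
  apply unif_cont_rect_plus; [apply unif_cont_rect_mult; [lra | lra | | exact Hw] |];
    apply unif_cont_rect_snd; intros x _.
  - exact (derivable_pt_lim_continuity_pt _ _ _ (derivable_pt_lim_exp_scal (- K) x)).
  - exact (derivable_pt_lim_continuity_pt _ _ _ (derivable_pt_lim_scal_id dl x)).
Qed.

(* At such a minimum the time derivative of [penalized dl] is [<= 0], while the
   differential inequality makes it [>= dl]. *)
Lemma penalized_no_interior_negative_min dl r0 t0 : 0 < dl -> a < r0 < b -> 0 < t0 <= T ->
  w r0 t0 < 0 ->
  (forall r t, a <= r <= b -> 0 <= t <= T -> penalized dl r0 t0 <= penalized dl r t) -> False.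
Proof.
  intros Hdl Hr0 Ht0 Hw0 Hmin.
  set (E := exp (- K * t0)). assert (HE : 0 < E) by apply exp_pos.
  destruct (interior_min_derivs (fun s => w s t0) (fun s => wr s t0) (fun s => wrr s t0)
              a b r0 Hr0) as [Hcrit Hconvex].
  { intros s Hs. destruct (Hderiv s t0 Hs Ht0) as [D1 [D2 _]]. auto. }
  { intros s Hs. assert (Hs0 : penalized dl r0 t0 <= penalized dl s t0) by (apply Hmin; lra).
    unfold penalized in Hs0. fold E in Hs0. apply Rmult_le_reg_l with E; auto. lra. }
  assert (Dt : derivable_pt_lim (fun t => penalized dl r0 t) t0
                 ((- K * E) * w r0 t0 + E * wt r0 t0 + dl)).
  { apply derivable_pt_lim_plus'; [apply derivable_pt_lim_mult'|].
    - apply derivable_pt_lim_exp_scal.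
    - apply (Hderiv r0 t0 Hr0 Ht0).
    - apply derivable_pt_lim_scal_id. }
  assert (- K * E * w r0 t0 + E * wt r0 t0 + dl <= 0).
  { apply (left_min_deriv_nonpos _ _ t0 t0 ltac:(lra) Dt). intros; apply Hmin; lra. }
  assert (Hp := Hsuper r0 t0 Hr0 Ht0 Hcrit Hw0).
  assert (0 <= E * (wt r0 t0 - K * w r0 t0)) by (apply Rmult_le_pos; lra).
  lra.
Qed.

(* The penalty [dl t] is small enough that a negative value of [w] forces a negative
   minimum of [penalized dl], which the boundary and initial data push inside. *)
Lemma parabolic_min_principle r t : a <= r <= b -> 0 <= t <= T -> w r t >= 0.
Proof.
  intros Hr Ht.
  destruct (Rle_or_lt 0 (w r t)) as [|Hneg]; [lra | exfalso].
  set (E := exp (- K * t)). assert (HE : 0 < E) by apply exp_pos.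
  set (dl := - E * w r t / (2 * (T + 1))).
  assert (Hdl : 0 < dl) by (unfold dl; apply Rdiv_lt_0_compat; nra).
  destruct (unif_cont_rect_min a b 0 T ltac:(lra) ltac:(lra) _ (penalized_unif_cont dl))
    as [r0 [t0 [Hr0 [Ht0 Hmin]]]].
  assert (Hlt : penalized dl r0 t0 < 0).
  { apply Rle_lt_trans with (penalized dl r t); [apply Hmin; auto|]. unfold penalized, dl.
    fold E. replace (E * w r t + - E * w r t / (2 * (T + 1)) * t) with
      (E * w r t * (1 - t / (2 * (T + 1)))) by (field; lra).
    apply Rmult_neg_pos; [nra|].
    assert (t / (2 * (T + 1)) < 1)
      by (apply Rmult_lt_reg_r with (2 * (T + 1)); [lra | field_simplify; lra]).
    lra. }
  assert (Hw0 : w r0 t0 < 0).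
  { unfold penalized in Hlt. pose proof (exp_pos (- K * t0)).
    assert (0 <= dl * t0) by (apply Rmult_le_pos; lra). nra. }
  assert (Ht0p : 0 < t0).
  { destruct (Rle_or_lt t0 0); auto. replace t0 with 0 in Hw0 by lra.
    specialize (Hinit r0 Hr0). lra. }
  assert (Hr0i : a < r0 < b).
  { destruct (Hbound t0 ltac:(lra)).
    split; [destruct (Rle_or_lt r0 a) | destruct (Rle_or_lt b r0)]; auto;
      [replace r0 with a in Hw0 by lra | replace r0 with b in Hw0 by lra]; lra. }
  exact (penalized_no_interior_negative_min dl r0 t0 Hdl Hr0i ltac:(lra) Hw0 Hmin).
Qed.

End MinPrinciple.

Definition gauss_seq (z : R) (k : nat) : R :=
  INR (fact k) * Rpower (INR k) z / rprod z k.

Lemma INR_fact_pos k : 0 < INR (fact k).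
Proof. apply lt_0_INR, lt_O_fact. Qed.

Lemma rprod_pos z k : 0 < z -> 0 < rprod z k.
Proof.
  intros Hz; induction k as [|k IH]; [exact Hz|].
  change (rprod z (S k)) with (rprod z k * (z + INR (S k))).
  apply Rmult_lt_0_compat; auto. pose proof (pos_INR (S k)); lra.
Qed.

Lemma rprod_succ z k : rprod z (S k) = z * rprod (z + 1) k.
Proof.
  induction k as [|k IH]; [simpl; ring|].
  change (rprod z (S (S k))) with (rprod z (S k) * (z + INR (S (S k)))).
  rewrite IH. change (rprod (z + 1) (S k)) with (rprod (z + 1) k * (z + 1 + INR (S k))).
  rewrite (S_INR (S k)). ring.
Qed.

Lemma gauss_seq_shift z k : 0 < z ->
  gauss_seq (z + 1) (S k) = gauss_seq z (S k) * (INR (S k) * z / (z + 1 + INR (S k))).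
Proof.
  intros Hz. unfold gauss_seq.
  assert (0 < INR (S k)) by (apply lt_0_INR; lia).
  rewrite Rpower_plus, Rpower_1 by auto.
  change (rprod (z + 1) (S k)) with (rprod (z + 1) k * (z + 1 + INR (S k))).
  rewrite rprod_succ.
  assert (0 < rprod (z + 1) k) by (apply rprod_pos; lra).
  field. repeat split; lra.
Qed.

Lemma gauss_ratio_lim z : 0 < z -> is_lim_seq (fun k => INR (S k) * z / (z + 1 + INR (S k))) z.
Proof.
  intros Hz.
  apply is_lim_seq_ext with (fun k => z - z * (z + 1) * / (z + 1 + INR (S k))).
  { intros k. assert (0 < INR (S k)) by (apply lt_0_INR; lia). field. lra. }
  assert (Hinf : is_lim_seq (fun k => z + 1 + INR (S k)) p_infty).
  { apply is_lim_seq_plus with (z + 1) p_infty; [apply is_lim_seq_const | | reflexivity].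
    apply (is_lim_seq_incr_1 INR p_infty), is_lim_seq_INR. }
  assert (H := is_lim_seq_minus' _ _ z _ (is_lim_seq_const z)
    (is_lim_seq_mult' _ _ (z * (z + 1)) 0 (is_lim_seq_const _)
       (is_lim_seq_inv _ p_infty Hinf ltac:(discriminate)))).
  replace (z - z * (z + 1) * 0) with z in H by ring. exact H.
Qed.

Lemma gauss_seq_lim_shift z (L : R) : 0 < z ->
  is_lim_seq (gauss_seq z) L -> is_lim_seq (gauss_seq (z + 1)) (z * L).
Proof.
  intros Hz H. apply is_lim_seq_incr_1.
  apply is_lim_seq_ext with (fun k => gauss_seq z (S k) * (INR (S k) * z / (z + 1 + INR (S k)))).
  { intros k; rewrite gauss_seq_shift; auto. }
  rewrite Rmult_comm. apply is_lim_seq_mult'; [|apply gauss_ratio_lim; auto].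
  apply (is_lim_seq_incr_1 (gauss_seq z) L). exact H.
Qed.

(* Concavity of [x |-> x ^ w]: the tangent line at [1]. *)
Lemma Rpower_le_tangent w x : 0 <= w <= 1 -> 0 < x -> Rpower x w <= 1 + w * (x - 1).
Proof.
  intros Hw Hx. unfold Rpower.
  set (a := ln x). set (c := w * a).
  assert (Ea : exp a = x) by (unfold a; apply exp_ln; auto).
  assert (H1 : exp a >= exp c * (1 + a - c)).
  { replace (exp a) with (exp c * exp (a - c)) by (rewrite <- exp_plus; f_equal; ring).
    apply Rle_ge, Rmult_le_compat_l; [left; apply exp_pos|].
    pose proof (exp_ineq1_le (a - c)); lra. }
  assert (H2 : 1 >= exp c * (1 - c)).
  { replace 1 with (exp c * exp (- c)) at 1
      by (rewrite <- exp_plus; replace (c + - c) with 0 by ring; apply exp_0).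
    apply Rle_ge, Rmult_le_compat_l; [left; apply exp_pos|].
    pose proof (exp_ineq1_le (- c)); lra. }
  assert (H : w * exp a + (1 - w) * 1 >= exp c * (w * (1 + a - c) + (1 - w) * (1 - c))) by nra.
  replace (w * (1 + a - c) + (1 - w) * (1 - c)) with 1 in H by (unfold c; ring).
  rewrite Ea in H. lra.
Qed.

Lemma Rpower_div_mult x y w : 0 < x -> 0 < y -> Rpower x w = Rpower (x / y) w * Rpower y w.
Proof.
  intros. rewrite Rpower_mult_distr; [f_equal; field; lra | apply Rdiv_lt_0_compat | ]; auto.
Qed.

(* For [0 < w <= 1], [gauss_seq w] increases (from index 1) and is dominated by the
   decreasing sequence [gauss_upper w] shifted by one. *)
Definition gauss_upper (w : R) (k : nat) : R :=
  INR (fact k) * Rpower (INR k + 1) w / rprod w k.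

Section GaussUnitInterval.
Variable w : R.
Hypothesis Hw : 0 < w <= 1.

Lemma gauss_seq_increasing k : gauss_seq w (S k) <= gauss_seq w (S (S k)).
Proof.
  unfold gauss_seq.
  set (m := INR (S k)). assert (Hm : 0 < m) by (apply lt_0_INR; lia).
  change (rprod w (S (S k))) with (rprod w (S k) * (w + INR (S (S k)))).
  change (fact (S (S k))) with (S (S k) * fact (S k))%nat.
  rewrite mult_INR, (S_INR (S k)). fold m.
  set (p := Rpower m w). set (p' := Rpower (m + 1) w).
  set (F := INR (fact (S k))). set (Rr := rprod w (S k)).
  assert (HF : 0 < F) by apply INR_fact_pos.
  assert (HR : 0 < Rr) by (apply rprod_pos; lra).
  assert (Hp' : 0 < p') by apply Rpower_pos.
  assert (Hp : p <= p' * (1 - w / (m + 1))).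
  { unfold p. rewrite (Rpower_div_mult m (m + 1) w), Rmult_comm by lra.
    apply Rmult_le_compat_l; [lra|].
    replace (1 - w / (m + 1)) with (1 + w * (m / (m + 1) - 1)) by (field; lra).
    apply Rpower_le_tangent; [lra | apply Rdiv_lt_0_compat; lra]. }
  assert (Key : p * (w + (m + 1)) <= (m + 1) * p').
  { apply Rle_trans with (p' * (1 - w / (m + 1)) * (w + (m + 1)));
      [apply Rmult_le_compat_r; lra|].
    replace (p' * (1 - w / (m + 1)) * (w + (m + 1))) with
      ((m + 1) * p' - p' * (w * w) / (m + 1)) by (field; lra).
    assert (0 <= p' * (w * w) / (m + 1)) by (apply Rdiv_le_0_compat; nra).
    lra. }
  replace (F * p / Rr) with (F / (Rr * (w + (m + 1))) * (p * (w + (m + 1)))) by (field; lra).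
  replace ((m + 1) * F * p' / (Rr * (w + (m + 1))))
    with (F / (Rr * (w + (m + 1))) * ((m + 1) * p')) by (field; lra).
  apply Rmult_le_compat_l; [apply Rdiv_le_0_compat; nra | exact Key].
Qed.

Lemma gauss_upper_decreasing k : gauss_upper w (S k) <= gauss_upper w k.
Proof.
  unfold gauss_upper.
  set (m := INR k). assert (Hm : 0 <= m) by apply pos_INR.
  change (rprod w (S k)) with (rprod w k * (w + INR (S k))).
  change (fact (S k)) with (S k * fact k)%nat.
  rewrite mult_INR, !S_INR. fold m.
  set (p := Rpower (m + 1) w). set (p' := Rpower (m + 1 + 1) w).
  set (F := INR (fact k)). set (Rr := rprod w k).
  assert (HF : 0 < F) by apply INR_fact_pos.
  assert (HR : 0 < Rr) by (apply rprod_pos; lra).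
  assert (Hp : 0 < p) by apply Rpower_pos.
  assert (Key : (m + 1) * p' <= p * (w + (m + 1))).
  { unfold p'. rewrite (Rpower_div_mult (m + 1 + 1) (m + 1) w) by lra. fold p.
    assert (Ht := Rpower_le_tangent w ((m + 1 + 1) / (m + 1)) ltac:(lra)
                    ltac:(apply Rdiv_lt_0_compat; lra)).
    replace (1 + w * ((m + 1 + 1) / (m + 1) - 1)) with ((w + (m + 1)) / (m + 1)) in Ht
      by (field; lra).
    apply Rle_trans with ((m + 1) * ((w + (m + 1)) / (m + 1) * p)); [|right; field; lra].
    apply Rmult_le_compat_l; [lra|]. apply Rmult_le_compat_r; lra. }
  replace ((m + 1) * F * p' / (Rr * (w + (m + 1))))
    with (F / (Rr * (w + (m + 1))) * ((m + 1) * p')) by (field; lra).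
  replace (F * p / Rr) with (F / (Rr * (w + (m + 1))) * (p * (w + (m + 1)))) by (field; lra).
  apply Rmult_le_compat_l; [apply Rdiv_le_0_compat; nra | exact Key].
Qed.

Lemma gauss_seq_le_upper k : gauss_seq w (S k) <= gauss_upper w (S k).
Proof.
  unfold gauss_seq, gauss_upper, Rdiv.
  apply Rmult_le_compat_r; [left; apply Rinv_0_lt_compat, rprod_pos; lra|].
  apply Rmult_le_compat_l; [left; apply INR_fact_pos|].
  apply Rle_Rpower_l; [lra|]. pose proof (lt_0_INR (S k) ltac:(lia)); lra.
Qed.

Lemma gauss_lim_unit : exists L, 0 < L /\ is_lim_seq (gauss_seq w) L.
Proof.
  set (A := fun k => gauss_seq w (S k)).
  assert (Hgrow : Un_growing A) by (intros k; apply gauss_seq_increasing).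
  assert (Hub : has_ub A).
  { exists (gauss_upper w 0%nat). intros x [k ->]. unfold A.
    apply Rle_trans with (gauss_upper w (S k)); [apply gauss_seq_le_upper|].
    clear A Hgrow. induction k as [|k IH]; [apply gauss_upper_decreasing|].
    pose proof (gauss_upper_decreasing (S k)); lra. }
  destruct (growing_cv A Hgrow Hub) as [L HL].
  assert (HA0 : 0 < A 0%nat).
  { unfold A, gauss_seq. apply Rdiv_lt_0_compat; [|apply rprod_pos; lra].
    apply Rmult_lt_0_compat; [apply INR_fact_pos | apply Rpower_pos]. }
  exists L; split; [pose proof (growing_ineq A L Hgrow HL 0%nat); lra|].
  apply is_lim_seq_incr_1, is_lim_seq_Reals. exact HL.
Qed.

End GaussUnitInterval.

Lemma gauss_lim z : 0 < z -> exists L, 0 < L /\ is_lim_seq (gauss_seq z) L.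
Proof.
  intros Hz. destruct (INR_unbounded z) as [m Hm].
  revert z Hz Hm. induction m as [|m IH]; intros y Hy Hym.
  - apply gauss_lim_unit. simpl in Hym. lra.
  - destruct (Rle_or_lt y 1) as [Hy1|Hy1]; [apply gauss_lim_unit; lra|].
    rewrite S_INR in Hym.
    destruct (IH (y - 1) ltac:(lra) ltac:(lra)) as [L [HL HL']].
    exists ((y - 1) * L). split; [apply Rmult_lt_0_compat; lra|].
    replace y with (y - 1 + 1) at 1 by ring. apply gauss_seq_lim_shift; auto. lra.
Qed.

Lemma Gamma_spec z : 0 < z -> 0 < Gamma z /\ Un_cv (gauss_seq z) (Gamma z).
Proof.
  intros Hz. destruct (gauss_lim z Hz) as [L [HL HL']].
  apply is_lim_seq_Reals in HL'.
  assert (HG : Un_cv (gauss_seq z) (Gamma z)).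
  { apply (epsilon_spec (inhabits 0) (fun l => Un_cv _ l)). exists L. exact HL'. }
  rewrite (UL_sequence _ _ _ HG HL'). auto.
Qed.

Lemma Gamma_pos z : 0 < z -> 0 < Gamma z.
Proof. apply Gamma_spec. Qed.

Lemma Gamma_succ z : 0 < z -> Gamma (z + 1) = z * Gamma z.
Proof.
  intros Hz.
  assert (H := gauss_seq_lim_shift z _ Hz (proj2 (is_lim_seq_Reals _ _) (proj2 (Gamma_spec z Hz)))).
  apply is_lim_seq_Reals in H.
  exact (UL_sequence _ _ _ (proj2 (Gamma_spec (z + 1) ltac:(lra))) H).
Qed.

Section BesselSeries.
Variable nv : R.
Hypothesis Hnv : 0 < nv.

(* [J_nu x = (x/2)^nu * Bser (x^2/4)] with [Bser] the power series of these coefficients. *)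
Definition bessel_coef (m : nat) : R :=
  (-1) ^ m / (INR (fact m) * Gamma (INR m + nv + 1)).

Lemma Gamma_shift_pos m : 0 < Gamma (INR m + nv + 1).
Proof. apply Gamma_pos. pose proof (pos_INR m); lra. Qed.

Lemma bessel_coef_succ m :
  bessel_coef (S m) * (INR (S m) * (INR m + nv + 1)) = - bessel_coef m.
Proof.
  unfold bessel_coef.
  replace (INR (S m) + nv + 1) with (INR m + nv + 1 + 1) by (rewrite S_INR; ring).
  rewrite Gamma_succ by (pose proof (pos_INR m); lra).
  change (fact (S m)) with (S m * fact m)%nat. rewrite mult_INR. simpl pow.
  pose proof (lt_0_INR (S m) ltac:(lia)). pose proof (INR_fact_pos m).
  pose proof (Gamma_shift_pos m). pose proof (pos_INR m).
  field. repeat split; lra.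
Qed.

Lemma bessel_coef_neq0 m : bessel_coef m <> 0.
Proof.
  unfold bessel_coef. apply Rmult_integral_contrapositive. split.
  - apply pow_nonzero; lra.
  - apply Rinv_neq_0_compat.
    pose proof (INR_fact_pos m); pose proof (Gamma_shift_pos m). nra.
Qed.

Lemma bessel_coef_0_pos : 0 < bessel_coef 0.
Proof.
  unfold bessel_coef. pose proof (Gamma_shift_pos 0). simpl in *.
  apply Rdiv_lt_0_compat; lra.
Qed.

Lemma CV_radius_bessel_coef : CV_radius bessel_coef = p_infty.
Proof.
  apply CV_radius_infinite_DAlembert; [apply bessel_coef_neq0|].
  apply is_lim_seq_ext with (fun m => / (INR (S m) * (INR m + nv + 1))).
  { intros m. pose proof (bessel_coef_succ m).
    pose proof (lt_0_INR (S m) ltac:(lia)). pose proof (pos_INR m).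
    assert (Hq : bessel_coef (S m) / bessel_coef m = - / (INR (S m) * (INR m + nv + 1))).
    { pose proof (bessel_coef_neq0 m). field_simplify_eq; [lra | repeat split; lra]. }
    rewrite Hq, Rabs_Ropp, Rabs_right; auto. left; apply Rinv_0_lt_compat; nra. }
  replace (Finite 0) with (Rbar_inv p_infty) by reflexivity.
  apply is_lim_seq_inv; [|discriminate].
  apply is_lim_seq_mult with p_infty p_infty; [| | reflexivity].
  - apply (is_lim_seq_incr_1 INR p_infty), is_lim_seq_INR.
  - apply is_lim_seq_plus with p_infty 1; [|apply is_lim_seq_const | reflexivity].
    apply is_lim_seq_plus with p_infty nv;
      [apply is_lim_seq_INR | apply is_lim_seq_const | reflexivity].
Qed.

Definition Bser := PSeries bessel_coef.
Definition Bser' := PSeries (PS_derive bessel_coef).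
Definition Bser'' := PSeries (PS_derive (PS_derive bessel_coef)).

Lemma CV_radius_bessel_derive : CV_radius (PS_derive bessel_coef) = p_infty.
Proof. rewrite CV_radius_derive; apply CV_radius_bessel_coef. Qed.

Lemma CV_radius_bessel_derive2 : CV_radius (PS_derive (PS_derive bessel_coef)) = p_infty.
Proof. rewrite !CV_radius_derive; apply CV_radius_bessel_coef. Qed.

Lemma Rbar_lt_p_infty_radius (a : nat -> R) x :
  CV_radius a = p_infty -> Rbar_lt (Rabs x) (CV_radius a).
Proof. intros ->; exact I. Qed.

Lemma is_derive_Bser y : is_derive Bser y (Bser' y).
Proof. apply is_derive_PSeries, Rbar_lt_p_infty_radius, CV_radius_bessel_coef. Qed.

Lemma is_derive_Bser' y : is_derive Bser' y (Bser'' y).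
Proof. apply is_derive_PSeries, Rbar_lt_p_infty_radius, CV_radius_bessel_derive. Qed.

Lemma Bser_ode y : y * Bser'' y + (nv + 1) * Bser' y + Bser y = 0.
Proof.
  assert (E0 : ex_pseries bessel_coef y)
    by apply CV_radius_inside, Rbar_lt_p_infty_radius, CV_radius_bessel_coef.
  assert (E1 : ex_pseries (PS_derive bessel_coef) y)
    by apply CV_radius_inside, Rbar_lt_p_infty_radius, CV_radius_bessel_derive.
  assert (E2 : ex_pseries (PS_derive (PS_derive bessel_coef)) y)
    by apply CV_radius_inside, Rbar_lt_p_infty_radius, CV_radius_bessel_derive2.
  unfold Bser, Bser', Bser''.
  rewrite <- PSeries_incr_1, <- PSeries_scal.
  rewrite <- PSeries_plus by (apply ex_pseries_incr_1 || apply ex_pseries_scal;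
                              auto; apply Rmult_comm).
  rewrite <- PSeries_plus;
    [| apply ex_pseries_plus; [apply ex_pseries_incr_1 | apply ex_pseries_scal];
       auto; apply Rmult_comm | auto].
  rewrite <- (PSeries_const_0 y). apply PSeries_ext. intros k.
  unfold PS_plus, PS_scal, PS_incr_1, PS_derive. simpl.
  unfold plus, scal, zero; simpl. unfold mult; simpl.
  destruct k as [|j].
  - pose proof (bessel_coef_succ 0). simpl in *. lra.
  - pose proof (bessel_coef_succ (S j)).
    change (match j with 0%nat => 1 | S _ => INR j + 1 end) with (INR (S j)).
    rewrite !S_INR in *. lra.
Qed.

Lemma sum_f_R0_scal (b : nat -> R) K N :
  sum_f_R0 (fun m => K * b m) N = K * sum_f_R0 b N.
Proof. induction N as [|N IH]; simpl; [|rewrite IH]; ring. Qed.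

Lemma BesselJ_eq_Bser x : 0 < x -> BesselJ nv x = Rpower (x / 2) nv * Bser (x * x / 4).
Proof.
  intros Hx. set (s := x * x / 4).
  assert (Hs : Un_cv (fun N => sum_f_R0 (fun m => bessel_coef m * s ^ m) N) (Bser s)).
  { apply is_lim_seq_Reals.
    apply is_lim_seq_ext with (sum_n (fun k => scal (pow_n s k) (bessel_coef k))).
    { intros N. rewrite sum_n_Reals. apply sum_eq. intros i _.
      rewrite pow_n_pow. unfold scal; simpl. unfold mult; simpl. ring. }
    apply PSeries_correct, CV_radius_inside, Rbar_lt_p_infty_radius, CV_radius_bessel_coef. }
  assert (Hc : Un_cv (fun N => sum_f_R0 (fun m => (-1) ^ m /
              (INR (fact m) * Gamma (INR m + nv + 1)) * pw (x / 2) (2 * INR m + nv)) N)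
              (Rpower (x / 2) nv * Bser s)).
  { apply is_lim_seq_Reals. apply is_lim_seq_Reals in Hs.
    apply is_lim_seq_ext with
      (fun N => Rpower (x / 2) nv * sum_f_R0 (fun m => bessel_coef m * s ^ m) N).
    { intros N. rewrite <- sum_f_R0_scal. apply sum_eq. intros i _.
      assert (Hsq : Rpower (x / 2) 2 = x / 2 * (x / 2)).
      { replace 2 with (1 + 1) by ring. rewrite Rpower_plus, Rpower_1; lra. }
      rewrite pw_pos, Rpower_plus, <- Rpower_mult, Rpower_pow, Hsq by (apply Rpower_pos || lra).
      unfold s, bessel_coef. replace (x / 2 * (x / 2)) with (x * x / 4) by field.
      unfold Rdiv. ring. }
    apply (is_lim_seq_scal_l _ (Rpower (x / 2) nv) _ Hs). }
  apply (UL_sequence _ _ _ (epsilon_spec (inhabits 0) (fun l => Un_cv _ l) (ex_intro _ _ Hc)) Hc).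
Qed.

End BesselSeries.

Section BesselFunction.
Variable nv : R.
Hypothesis Hnv : 0 < nv.

Notation B := (Bser nv). Notation B' := (Bser' nv). Notation B'' := (Bser'' nv).

Definition Jnu x := Rpower (x / 2) nv * B (x * x / 4).
Definition Jnu' x :=
  Rpower (x / 2) nv * (nv * / x * B (x * x / 4) + x * / 2 * B' (x * x / 4)).
Definition Jnu'' x :=
  Rpower (x / 2) nv * (nv * (nv - 1) * / (x * x) * B (x * x / 4)
    + (nv + / 2) * B' (x * x / 4) + x * x / 4 * B'' (x * x / 4)).

Lemma derivable_pt_lim_half_pow x : 0 < x ->
  derivable_pt_lim (fun t => Rpower (t / 2) nv) x (nv * Rpower (x / 2) nv * / x).
Proof.
  intros Hx.
  apply derivable_pt_lim_eq with (nv * Rpower (x / 2) nv * / (x / 2) * / 2); [field; lra|].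
  apply (derivable_pt_lim_comp' (fun t => t / 2) (fun y => Rpower y nv)).
  - apply derivable_pt_lim_eq with (1 / 2); [field|].
    apply derivable_pt_lim_div_scal, derivable_pt_lim_id.
  - apply derivable_pt_lim_Rpower_id. lra.
Qed.

Lemma derivable_pt_lim_quarter_square (F F' : R -> R) x :
  (forall y, is_derive F y (F' y)) ->
  derivable_pt_lim (fun t => F (t * t / 4)) x (F' (x * x / 4) * (x * / 2)).
Proof.
  intros HF. apply derivable_pt_lim_comp'; [|apply is_derive_Reals, HF].
  apply derivable_pt_lim_eq with ((1 * x + x * 1) / 4); [field|].
  apply derivable_pt_lim_div_scal, derivable_pt_lim_mult'; apply derivable_pt_lim_id.
Qed.

Lemma derivable_pt_lim_Jnu x : 0 < x -> derivable_pt_lim Jnu x (Jnu' x).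
Proof.
  intros Hx. unfold Jnu, Jnu'.
  apply derivable_pt_lim_eq with (nv * Rpower (x / 2) nv * / x * B (x * x / 4)
    + Rpower (x / 2) nv * (B' (x * x / 4) * (x * / 2))); [ring|].
  apply (derivable_pt_lim_mult' (fun t => Rpower (t / 2) nv) (fun t => B (t * t / 4)));
    [apply derivable_pt_lim_half_pow; auto|].
  apply derivable_pt_lim_quarter_square, is_derive_Bser; auto.
Qed.

Lemma derivable_pt_lim_Jnu' x : 0 < x -> derivable_pt_lim Jnu' x (Jnu'' x).
Proof.
  intros Hx. unfold Jnu', Jnu''.
  assert (DB := derivable_pt_lim_quarter_square B B' x (is_derive_Bser nv Hnv)).
  assert (DB' := derivable_pt_lim_quarter_square B' B'' x (is_derive_Bser' nv Hnv)).
  assert (D1 : derivable_pt_lim (fun t => nv * / t * B (t * t / 4)) x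
     (nv * - / (x * x) * B (x * x / 4) + nv * / x * (B' (x * x / 4) * (x * / 2)))).
  { apply (derivable_pt_lim_mult' (fun t => nv * / t) (fun t => B (t * t / 4))); auto.
    apply derivable_pt_lim_scal', derivable_pt_lim_inv_id; lra. }
  assert (D2 : derivable_pt_lim (fun t => t * / 2 * B' (t * t / 4)) x
     (1 * / 2 * B' (x * x / 4) + x * / 2 * (B'' (x * x / 4) * (x * / 2)))).
  { apply (derivable_pt_lim_mult' (fun t => t * / 2) (fun t => B' (t * t / 4))); auto.
    apply derivable_pt_lim_scal_right, derivable_pt_lim_id. }
  eapply derivable_pt_lim_eq;
    [|apply (derivable_pt_lim_mult' (fun t => Rpower (t / 2) nv));
        [apply derivable_pt_lim_half_pow; auto | apply (derivable_pt_lim_plus' _ _ _ _ _ D1 D2)]].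
  cbv beta. field. lra.
Qed.

Lemma Jnu_ode x : 0 < x -> x * x * Jnu'' x + x * Jnu' x + (x * x - nv * nv) * Jnu x = 0.
Proof.
  intros Hx. pose proof (Bser_ode nv Hnv (x * x / 4)) as E. unfold Jnu, Jnu', Jnu''.
  transitivity (Rpower (x / 2) nv * (x * x) * (x * x / 4 * B'' (x * x / 4)
    + (nv + 1) * B' (x * x / 4) + B (x * x / 4))); [field; lra|].
  rewrite E. ring.
Qed.

Lemma BesselJ_eq_Jnu x : 0 < x -> BesselJ nv x = Jnu x.
Proof. apply BesselJ_eq_Bser; auto. Qed.

Lemma derivable_pt_lim_BesselJ x : 0 < x -> derivable_pt_lim (BesselJ nv) x (Jnu' x).
Proof.
  intros Hx. apply (derivable_pt_lim_locally_ext Jnu _ x 0 (x + 1)); [lra| |].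
  - intros; symmetry; apply BesselJ_eq_Jnu; lra.
  - apply derivable_pt_lim_Jnu; auto.
Qed.

Lemma continuity_pt_at0 (F : R -> R) : continuity_pt F 0 -> forall e, 0 < e ->
  exists d, 0 < d /\ forall s, Rabs s < d -> Rabs (F s - F 0) < e.
Proof.
  intros C e He. destruct (C e He) as [d [Hd H]]. exists d; split; auto.
  intros s Hs. destruct (Req_dec s 0) as [->|Hs0]; [rewrite Rminus_diag, Rabs_R0; auto|].
  apply H. split; [split; [exact I | auto] |]. simpl; unfold R_dist. rewrite Rminus_0_r; auto.
Qed.

(* [Jnu' x = (x/2)^nu / x * (nu * Bser s + 2 s * Bser' s)] with [s = x^2/4]. *)
Lemma Bser_pos_near0 : exists d, 0 < d /\ forall s, 0 <= s < d ->
  0 < B s /\ 0 < nv * B s + 2 * s * B' s.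
Proof.
  assert (B0 : B 0 = bessel_coef nv 0) by (unfold Bser; rewrite PSeries_0; auto).
  pose proof (bessel_coef_0_pos nv Hnv) as Hc0.
  assert (CB : continuity_pt B 0)
    by exact (derivable_pt_lim_continuity_pt _ _ _ (proj1 (is_derive_Reals _ _ _) (is_derive_Bser nv Hnv 0))).
  assert (Ch : continuity_pt (fun s => nv * B s + 2 * s * B' s) 0).
  { apply continuity_pt_plus; [apply continuity_pt_scal; auto|].
    apply continuity_pt_mult; [apply continuity_pt_scal, continuity_pt_id|].
    exact (derivable_pt_lim_continuity_pt _ _ _ (proj1 (is_derive_Reals _ _ _) (is_derive_Bser' nv Hnv 0))). }
  destruct (continuity_pt_at0 _ CB (bessel_coef nv 0 / 2) ltac:(lra)) as [d1 [Hd1 H1]].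
  destruct (continuity_pt_at0 _ Ch (nv * bessel_coef nv 0 / 2) ltac:(nra)) as [d2 [Hd2 H2]].
  exists (Rmin d1 d2); split; [apply Rmin_pos; auto|]. intros s Hs.
  pose proof (Rmin_l d1 d2); pose proof (Rmin_r d1 d2).
  specialize (H1 s ltac:(rewrite Rabs_right; lra)). specialize (H2 s ltac:(rewrite Rabs_right; lra)).
  rewrite B0 in H1, H2. rewrite Rmult_0_r, Rmult_0_l, Rplus_0_r in H2.
  revert H1 H2; unfold Rabs; repeat destruct Rcase_abs; split; nra.
Qed.

Lemma Jnu_pos_near0 y : 0 < y -> exists x0, 0 < x0 < y /\ 0 < Jnu' x0 /\
  forall x, 0 < x <= x0 -> 0 < Jnu x.
Proof.
  intros Hy. destruct Bser_pos_near0 as [d [Hd Hpos]].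
  pose proof (Rmin_l (y / 2) (Rmin 1 d)); pose proof (Rmin_r (y / 2) (Rmin 1 d)).
  pose proof (Rmin_l 1 d); pose proof (Rmin_r 1 d).
  set (x0 := Rmin (y / 2) (Rmin 1 d)) in *.
  assert (Hx0 : 0 < x0) by (unfold x0; repeat apply Rmin_pos; lra).
  assert (Hsmall : forall x, 0 < x <= x0 -> 0 <= x * x / 4 < d).
  { intros x Hx. assert (x * x <= x * 1) by (apply Rmult_le_compat_l; lra). nra. }
  exists x0. split; [lra|]. split.
  - unfold Jnu'.
    replace (nv * / x0 * B (x0 * x0 / 4) + x0 * / 2 * B' (x0 * x0 / 4)) with
      (/ x0 * (nv * B (x0 * x0 / 4) + 2 * (x0 * x0 / 4) * B' (x0 * x0 / 4))) by (field; lra).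
    apply Rmult_lt_0_compat; [apply Rpower_pos|].
    apply Rmult_lt_0_compat; [apply Rinv_0_lt_compat; lra|].
    apply Hpos, Hsmall; lra.
  - intros x Hx. unfold Jnu. apply Rmult_lt_0_compat; [apply Rpower_pos|].
    apply Hpos, Hsmall; lra.
Qed.

(* [Jnu'] cannot vanish before [x1] and is positive near [0]; by the intermediate
   value theorem it stays positive, and [Jnu] increases from positive values. *)
Lemma Jnu_Jnu'_pos x1 : 0 < x1 ->
  (forall y, 0 < y < x1 -> exists d, d <> 0 /\ derivable_pt_lim (BesselJ nv) y d) ->
  forall y, 0 < y < x1 -> 0 < Jnu y /\ 0 < Jnu' y.
Proof.
  intros Hx1 Hd.
  assert (Jnu'_neq0 : forall y, 0 < y < x1 -> Jnu' y <> 0).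
  { intros y Hy. destruct (Hd y Hy) as [d [Hd0 Hdd]].
    rewrite <- (uniqueness_limite _ _ _ _ Hdd (derivable_pt_lim_BesselJ y ltac:(lra))). auto. }
  assert (Jnu'_pos : forall y, 0 < y < x1 -> 0 < Jnu' y).
  { intros y Hy. destruct (Rle_or_lt (Jnu' y) 0) as [Hn|]; auto. exfalso.
    destruct (Jnu_pos_near0 y ltac:(lra)) as [x0 [Hx0 [Hg _]]].
    destruct (Ranalysis5.IVT_interv (fun t => - Jnu' t) x0 y) as [z [Hz1 Hz2]].
    - intros a Ha. apply continuity_pt_opp, derivable_pt_lim_continuity_pt with (Jnu'' a).
      apply derivable_pt_lim_Jnu'. lra.
    - lra.
    - lra.
    - destruct Hn as [Hn|Hn]; [lra|]. exfalso; apply (Jnu'_neq0 y); auto.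
    - apply (Jnu'_neq0 z); [lra|]. lra. }
  intros y Hy. split; [|apply Jnu'_pos; auto].
  destruct (Jnu_pos_near0 y ltac:(lra)) as [x0 [Hx0 [_ Hg]]].
  destruct (MVT_cor2 Jnu Jnu' x0 y) as [c [Hc1 Hc2]];
    [lra | intros; apply derivable_pt_lim_Jnu; lra |].
  assert (0 < Jnu' c) by (apply Jnu'_pos; lra).
  assert (0 < Jnu x0) by (apply Hg; lra).
  assert (0 < Jnu' c * (y - x0)) by (apply Rmult_lt_0_compat; lra). lra.
Qed.

End BesselFunction.

Lemma Rpower_third_cube y : 0 < y -> Rpower y (1 / 3) ^ 3 = y.
Proof.
  intros Hy. rewrite <- Rpower_pow by apply Rpower_pos. rewrite Rpower_mult.
  replace (1 / 3 * INR 3) with 1 by (simpl; field). apply Rpower_1; auto.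
Qed.

Section StationarySolution.
Variable n : nat.
Hypothesis Hn : (2 <= n)%nat.

Lemma INR_ge2 : 2 <= INR n.
Proof. replace 2 with (INR 2) by (simpl; ring). apply le_INR; auto. Qed.

Lemma alpha_pos : 0 < alpha n.
Proof. apply Rpower_pos. Qed.

Lemma alpha_cube : alpha n ^ 3 = 9 * INR n - 15.
Proof. apply Rpower_third_cube. pose proof INR_ge2; lra. Qed.

Definition ustar' r := - alpha n / 3 * Rpower r (1 / 3) * / r.
Definition ustar'' r := 2 * alpha n / 9 * Rpower r (1 / 3) * / (r * r).

Lemma ustar_pos_eq r : 0 < r -> ustar n r = - alpha n * Rpower r (1 / 3).
Proof. intros; unfold ustar; rewrite pw_pos; auto. Qed.

Lemma derivable_pt_lim_ustar r : 0 < r -> derivable_pt_lim (ustar n) r (ustar' r).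
Proof.
  intros Hr.
  apply (derivable_pt_lim_locally_ext (fun x => - alpha n * Rpower x (1 / 3)) _ r 0 (r + 1));
    [lra | intros; symmetry; apply ustar_pos_eq; lra|].
  apply derivable_pt_lim_eq with (- alpha n * (1 / 3 * Rpower r (1 / 3) * / r));
    [unfold ustar'; field; lra|].
  apply derivable_pt_lim_scal', derivable_pt_lim_Rpower_id; auto.
Qed.

Lemma continuity_pt_ustar r : 0 < r -> continuity_pt (ustar n) r.
Proof. intros Hr. exact (derivable_pt_lim_continuity_pt _ _ _ (derivable_pt_lim_ustar r Hr)). Qed.

Lemma derivable_pt_lim_ustar' r : 0 < r -> derivable_pt_lim ustar' r (ustar'' r).
Proof.
  intros Hr. unfold ustar', ustar''.
  apply derivable_pt_lim_eq with (- alpha n / 3 * (1 / 3 * Rpower r (1 / 3) * / r) * / r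
    + - alpha n / 3 * Rpower r (1 / 3) * (- / (r * r))); [field; lra|].
  apply (derivable_pt_lim_mult' (fun x => - alpha n / 3 * Rpower x (1 / 3)) (fun x => / x)).
  - apply derivable_pt_lim_scal', derivable_pt_lim_Rpower_id; auto.
  - apply derivable_pt_lim_inv_id; lra.
Qed.

Lemma ustar'_neg r : 0 < r -> ustar' r < 0.
Proof.
  intros Hr. unfold ustar'. pose proof alpha_pos. pose proof (Rpower_pos r (1 / 3)).
  assert (0 < alpha n / 3 * Rpower r (1 / 3) * / r).
  { apply Rmult_lt_0_compat; [apply Rmult_lt_0_compat; lra | apply Rinv_0_lt_compat; lra]. }
  replace (- alpha n / 3 * Rpower r (1 / 3) * / r) with
    (- (alpha n / 3 * Rpower r (1 / 3) * / r)) by (field; lra). lra.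
Qed.

(* All three identities reduce to [alpha^3 = 9n - 15] and [(r^(1/3))^3 = r]. *)
Lemma ustar_ode r : 0 < r ->
  ustar'' r + (INR n - 1) / r * ustar' r + ustar n r * ustar' r ^ 3 = 0.
Proof.
  intros Hr. rewrite ustar_pos_eq by auto.
  pose proof alpha_cube as A. pose proof (Rpower_third_cube r Hr) as S.
  unfold ustar', ustar''.
  replace ((- alpha n * Rpower r (1 / 3)) * (- alpha n / 3 * Rpower r (1 / 3) * / r) ^ 3) with
    (alpha n ^ 3 * Rpower r (1 / 3) ^ 3 * alpha n * Rpower r (1 / 3) / (27 * r * r * r))
    by (field; lra).
  rewrite A, S. field. lra.
Qed.

Lemma ustar_ustar'_sq r : 0 < r -> ustar n r * ustar' r ^ 2 = - (3 * INR n - 5) / (3 * r).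
Proof.
  intros Hr. rewrite ustar_pos_eq by auto.
  pose proof alpha_cube as A. pose proof (Rpower_third_cube r Hr) as S.
  unfold ustar'.
  replace ((- alpha n * Rpower r (1 / 3)) * (- alpha n / 3 * Rpower r (1 / 3) * / r) ^ 2) with
    (- (alpha n ^ 3 * Rpower r (1 / 3) ^ 3) / (9 * r * r)) by (field; lra).
  rewrite A, S. field. lra.
Qed.

Lemma ustar'_cube r : 0 < r -> ustar' r ^ 3 = - (3 * INR n - 5) / (9 * (r * r)).
Proof.
  intros Hr. pose proof alpha_cube as A. pose proof (Rpower_third_cube r Hr) as S.
  unfold ustar'.
  replace ((- alpha n / 3 * Rpower r (1 / 3) * / r) ^ 3) with
    (- (alpha n ^ 3 * Rpower r (1 / 3) ^ 3) / (27 * r * r * r)) by (field; lra).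
  rewrite A, S. field. lra.
Qed.

End StationarySolution.

Section Eigenfunction.
Variable n : nat.
Hypothesis Hn : (2 <= n)%nat.
Variables lam Cv : R.
Hypothesis Hlam : 0 < lam.

Lemma nu_pos : 0 < nu n.
Proof.
  pose proof (INR_ge2 n Hn). unfold nu.
  apply Rdiv_lt_0_compat; [apply sqrt_lt_R0; nra | lra].
Qed.

Lemma nu_sq : nu n * nu n = (36 * INR n ^ 2 - 96 * INR n + 61) / 36.
Proof.
  pose proof (INR_ge2 n Hn). unfold nu.
  replace (sqrt (36 * INR n ^ 2 - 96 * INR n + 61) / 6 * (sqrt (36 * INR n ^ 2 - 96 * INR n + 61) / 6))
    with (sqrt (36 * INR n ^ 2 - 96 * INR n + 61) * sqrt (36 * INR n ^ 2 - 96 * INR n + 61) / 36)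
    by field.
  rewrite sqrt_sqrt; nra.
Qed.

Notation J := (Jnu (nu n)). Notation J' := (Jnu' (nu n)). Notation J'' := (Jnu'' (nu n)).
Notation a := (INR n - 3 / 2).

(* The radial profile of [v]: [vfun r t = exp (- lam^2 t) * vr r]. *)
Definition vr r := Cv * Rpower r a * J (lam * r).
Definition vr' r := Cv * a * (Rpower r a * / r) * J (lam * r) + Cv * lam * Rpower r a * J' (lam * r).
Definition vr'' r := Cv * (a * (a - 1) * Rpower r a * / (r * r) * J (lam * r)
  + 2 * a * lam * Rpower r a * / r * J' (lam * r) + lam * lam * Rpower r a * J'' (lam * r)).

Lemma derivable_pt_lim_Jnu_scal r : 0 < r ->
  derivable_pt_lim (fun t => J (lam * t)) r (J' (lam * r) * lam).
Proof.
  intros. apply (derivable_pt_lim_comp' (fun t => lam * t) J);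
    [apply derivable_pt_lim_scal_id | apply derivable_pt_lim_Jnu; [apply nu_pos | nra]].
Qed.

Lemma derivable_pt_lim_Jnu'_scal r : 0 < r ->
  derivable_pt_lim (fun t => J' (lam * t)) r (J'' (lam * r) * lam).
Proof.
  intros. apply (derivable_pt_lim_comp' (fun t => lam * t) J');
    [apply derivable_pt_lim_scal_id | apply derivable_pt_lim_Jnu'; [apply nu_pos | nra]].
Qed.

Lemma derivable_pt_lim_vr r : 0 < r -> derivable_pt_lim vr r (vr' r).
Proof.
  intros Hr. unfold vr, vr'.
  apply derivable_pt_lim_eq with (Cv * (a * Rpower r a * / r) * J (lam * r)
    + Cv * Rpower r a * (J' (lam * r) * lam)); [field; lra|].
  apply (derivable_pt_lim_mult' (fun t => Cv * Rpower t a) (fun t => J (lam * t))).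
  - apply derivable_pt_lim_scal', derivable_pt_lim_Rpower_id; auto.
  - apply derivable_pt_lim_Jnu_scal; auto.
Qed.

Lemma derivable_pt_lim_vr' r : 0 < r -> derivable_pt_lim vr' r (vr'' r).
Proof.
  intros Hr. unfold vr', vr''.
  assert (Dpow : derivable_pt_lim (fun t => Rpower t a * / t) r ((a - 1) * Rpower r a * / (r * r))).
  { apply derivable_pt_lim_eq with (a * Rpower r a * / r * / r + Rpower r a * (- / (r * r)));
      [field; lra|].
    apply (derivable_pt_lim_mult' (fun t => Rpower t a) (fun t => / t));
      [apply derivable_pt_lim_Rpower_id; auto | apply derivable_pt_lim_inv_id; lra]. }
  apply derivable_pt_lim_eq with
    ((Cv * a * ((a - 1) * Rpower r a * / (r * r)) * J (lam * r)
      + Cv * a * (Rpower r a * / r) * (J' (lam * r) * lam))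
     + (Cv * lam * (a * Rpower r a * / r) * J' (lam * r)
      + Cv * lam * Rpower r a * (J'' (lam * r) * lam))); [field; lra|].
  apply (derivable_pt_lim_plus' (fun t => Cv * a * (Rpower t a * / t) * J (lam * t))
           (fun t => Cv * lam * Rpower t a * J' (lam * t))).
  - apply (derivable_pt_lim_mult' (fun t => Cv * a * (Rpower t a * / t)) (fun t => J (lam * t))).
    + apply derivable_pt_lim_scal', Dpow.
    + apply derivable_pt_lim_Jnu_scal; auto.
  - apply (derivable_pt_lim_mult' (fun t => Cv * lam * Rpower t a) (fun t => J' (lam * t))).
    + apply derivable_pt_lim_scal', derivable_pt_lim_Rpower_id; auto.
    + apply derivable_pt_lim_Jnu'_scal; auto.
Qed.

(* [vr] is an eigenfunction, with eigenvalue [lam^2], of minus the linearisation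
   [phi'' + ((n - 1) / r + 3 ustar ustar'^2) phi' + ustar'^3 phi] of the stationary
   equation at [ustar]; the order [nu] is chosen so that the Bessel equation appears. *)
Lemma vr_ode r : 0 < r ->
  vr'' r + (4 - 2 * INR n) / r * vr' r - (3 * INR n - 5) / (9 * (r * r)) * vr r
    + lam * lam * vr r = 0.
Proof.
  intros Hr. pose proof (Jnu_ode (nu n) nu_pos (lam * r) ltac:(nra)) as E.
  pose proof nu_sq as N. unfold vr, vr', vr''.
  set (g0 := J (lam * r)) in *. set (g1 := J' (lam * r)) in *. set (g2 := J'' (lam * r)) in *.
  set (p := Rpower r a).
  transitivity (Cv * p / (r * r) * (lam * r * (lam * r) * g2 + lam * r * g1
      + (lam * r * (lam * r) - nu n * nu n) * g0)
    + Cv * p / (r * r) * g0 * (nu n * nu n - (36 * INR n ^ 2 - 96 * INR n + 61) / 36));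
    [field; lra|].
  rewrite E, N. ring.
Qed.

Lemma vr_vr'_pos x1 : 0 < x1 -> 0 < Cv ->
  (forall y, 0 < y < x1 -> exists d, d <> 0 /\ derivable_pt_lim (BesselJ (nu n)) y d) ->
  forall r, 0 < r -> lam * r < x1 -> 0 < vr r /\ 0 < vr' r.
Proof.
  intros Hx1 HCv Hd r Hr Hrx.
  destruct (Jnu_Jnu'_pos (nu n) nu_pos x1 Hx1 Hd (lam * r) ltac:(split; nra)) as [H0 H1].
  pose proof (Rpower_pos r a). pose proof (INR_ge2 n Hn).
  assert (0 < a) by lra. assert (0 < / r) by (apply Rinv_0_lt_compat; auto).
  unfold vr, vr'. revert H0 H1. generalize (J (lam * r)) (J' (lam * r)). intros j j' Hj Hj'.
  split.
  - repeat apply Rmult_lt_0_compat; auto.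
  - apply Rplus_lt_0_compat; repeat apply Rmult_lt_0_compat; auto.
Qed.

Lemma vfun_eq r t : 0 < r -> vfun n lam Cv r t = exp (- lam ^ 2 * t) * vr r.
Proof.
  intros Hr. unfold vfun, vr. rewrite pw_pos, BesselJ_eq_Jnu by (apply nu_pos || nra || auto).
  ring.
Qed.

Lemma derivable_pt_lim_vfun_r r t : 0 < r ->
  derivable_pt_lim (fun s => vfun n lam Cv s t) r (exp (- lam ^ 2 * t) * vr' r).
Proof.
  intros Hr.
  apply (derivable_pt_lim_locally_ext (fun s => exp (- lam ^ 2 * t) * vr s) _ r 0 (r + 1));
    [lra | intros; symmetry; apply vfun_eq; lra |].
  apply derivable_pt_lim_scal', derivable_pt_lim_vr; auto.
Qed.

Lemma derivable_pt_lim_vfun_t r t : 0 < r ->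
  derivable_pt_lim (fun y => vfun n lam Cv r y) t (- lam ^ 2 * exp (- lam ^ 2 * t) * vr r).
Proof.
  intros Hr. apply (derivable_pt_lim_ext (fun y => exp (- lam ^ 2 * y) * vr r));
    [intros; symmetry; apply vfun_eq; auto|].
  apply derivable_pt_lim_scal_right, derivable_pt_lim_exp_scal.
Qed.

End Eigenfunction.

Lemma pow3_le_of_abs_le s c : Rabs s <= c -> s ^ 3 <= c ^ 3.
Proof.
  intros Hs. pose proof (Rabs_pos s). pose proof (Rle_abs s). pose proof (Rle_abs (- s)).
  rewrite Rabs_Ropp in *. destruct (Rle_or_lt 0 s).
  - apply pow_incr; lra.
  - assert (0 < (- s) ^ 3) by (apply pow_lt; lra).
    assert (0 <= c ^ 3) by (apply pow_le; lra).
    replace (s ^ 3) with (- (- s) ^ 3) by ring. lra.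
Qed.

Section SemilinearComparison.
Variables (k a b cst T : R) (f : R -> R) (u ur urr ut : R -> R -> R).
Hypotheses (Hab : a < b) (HT : 0 < T).
Hypothesis Hf : forall s, Rabs s <= cst -> f s = s ^ 3.
Hypothesis Hu : unif_cont_rect a b 0 T u.
Hypothesis Hu_deriv : forall r t, a < r < b -> 0 < t <= T ->
  derivable_pt_lim (fun s => u s t) r (ur r t) /\
  derivable_pt_lim (fun s => ur s t) r (urr r t) /\
  derivable_pt_lim (fun s => u r s) t (ut r t).
Hypothesis Hpde : forall r t, a < r < b -> 0 < t <= T ->
  ut r t = urr r t + k / r * ur r t + u r t * f (ur r t).

Variables phi phir phirr phit : R -> R -> R.
Hypothesis Hphi : unif_cont_rect a b 0 T phi.
Hypothesis Hphi_deriv : forall r t, a < r < b -> 0 < t <= T ->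
  derivable_pt_lim (fun s => phi s t) r (phir r t) /\
  derivable_pt_lim (fun s => phir s t) r (phirr r t) /\
  derivable_pt_lim (fun s => phi r s) t (phit r t).
Hypothesis Hphir : forall r t, a < r < b -> 0 < t <= T -> Rabs (phir r t) <= cst.

(* Where [u - phi] has a critical point the two gradients agree, so [f] acts on both as
   the cube [phir ^ 3 <= cst ^ 3]; this gives the inequality of the minimum principle
   with [K = cst ^ 3]. *)
Lemma supersolution_ge :
  (forall r t, a < r < b -> 0 < t <= T ->
     phit r t >= phirr r t + k / r * phir r t + phi r t * phir r t ^ 3) ->
  (forall t, 0 <= t <= T -> phi a t >= u a t /\ phi b t >= u b t) ->
  (forall r, a <= r <= b -> phi r 0 >= u r 0) ->
  forall r t, a <= r <= b -> 0 <= t <= T -> phi r t >= u r t.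
Proof.
  intros Hsuper Hbound Hinit r t Hr Ht.
  enough (phi r t - u r t >= 0) by lra.
  apply (parabolic_min_principle (fun r t => phi r t - u r t) (fun r t => phir r t - ur r t)
    (fun r t => phirr r t - urr r t) (fun r t => phit r t - ut r t) a b T (cst ^ 3)
    Hab HT (unif_cont_rect_minus _ _ _ _ _ _ Hphi Hu)); auto.
  - intros s y Hs Hy. destruct (Hphi_deriv s y Hs Hy) as [P1 [P2 P3]].
    destruct (Hu_deriv s y Hs Hy) as [U1 [U2 U3]].
    repeat split; apply derivable_pt_lim_minus'; auto.
  - intros s y Hs Hy Hcrit Hneg. cbv beta in *.
    assert (Hgrad : ur s y = phir s y) by lra.
    rewrite (Hpde s y Hs Hy), Hgrad, Hf by (apply Hphir; auto).
    pose proof (Hsuper s y Hs Hy).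
    pose proof (pow3_le_of_abs_le _ _ (Hphir s y Hs Hy)).
    assert (0 <= (phi s y - u s y) * (phir s y ^ 3 - cst ^ 3)) by nra.
    nra.
  - intros y Hy. destruct (Hbound y Hy). lra.
  - intros s Hs. specialize (Hinit s Hs). lra.
Qed.

Lemma subsolution_le :
  (forall r t, a < r < b -> 0 < t <= T ->
     phit r t <= phirr r t + k / r * phir r t + phi r t * phir r t ^ 3) ->
  (forall t, 0 <= t <= T -> u a t >= phi a t /\ u b t >= phi b t) ->
  (forall r, a <= r <= b -> u r 0 >= phi r 0) ->
  forall r t, a <= r <= b -> 0 <= t <= T -> u r t >= phi r t.
Proof.
  intros Hsub Hbound Hinit r t Hr Ht.
  enough (u r t - phi r t >= 0) by lra.
  apply (parabolic_min_principle (fun r t => u r t - phi r t) (fun r t => ur r t - phir r t)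
    (fun r t => urr r t - phirr r t) (fun r t => ut r t - phit r t) a b T (cst ^ 3)
    Hab HT (unif_cont_rect_minus _ _ _ _ _ _ Hu Hphi)); auto.
  - intros s y Hs Hy. destruct (Hphi_deriv s y Hs Hy) as [P1 [P2 P3]].
    destruct (Hu_deriv s y Hs Hy) as [U1 [U2 U3]].
    repeat split; apply derivable_pt_lim_minus'; auto.
  - intros s y Hs Hy Hcrit Hneg. cbv beta in *.
    assert (Hgrad : ur s y = phir s y) by lra.
    rewrite (Hpde s y Hs Hy), Hgrad, Hf by (apply Hphir; auto).
    pose proof (Hsub s y Hs Hy).
    pose proof (pow3_le_of_abs_le _ _ (Hphir s y Hs Hy)).
    assert (0 <= (u s y - phi s y) * (phir s y ^ 3 - cst ^ 3)) by nra.
    nra.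
  - intros y Hy. destruct (Hbound y Hy). lra.
  - intros s Hs. specialize (Hinit s Hs). lra.
Qed.

End SemilinearComparison.

(* Expanding the cube, [ustar - th vr] leaves, besides the stationary equation for [ustar]
   and the eigenvalue equation for [vr], only the terms
   [3 U A b^2 - U b^3 + 3 c A^2 b - 3 c A b^2 + c b^3] with [b = th vr'], [c = th vr],
   [U = ustar < 0] and [A = ustar' < 0], each of which is nonnegative. *)
Lemma ustar_sub_vr_subsolution n lam Cv r th : (2 <= n)%nat -> 0 < lam -> 0 < r -> 0 < th ->
  0 <= vr n lam Cv r -> 0 <= vr' n lam Cv r ->
  lam ^ 2 * th * vr n lam Cv r <=
    (ustar'' n r - th * vr'' n lam Cv r) + (INR n - 1) / r * (ustar' n r - th * vr' n lam Cv r)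
    + (ustar n r - th * vr n lam Cv r) * (ustar' n r - th * vr' n lam Cv r) ^ 3.
Proof.
  intros Hn Hlam Hr Hth HV HB.
  pose proof (ustar_ode n Hn r Hr) as h1. pose proof (ustar_ustar'_sq n Hn r Hr) as h2.
  pose proof (ustar'_cube n Hn r Hr) as h3. pose proof (vr_ode n Hn lam Cv Hlam r Hr) as h4.
  assert (HU : ustar n r < 0).
  { rewrite ustar_pos_eq by auto. pose proof (alpha_pos n). pose proof (Rpower_pos r (1 / 3)). nra. }
  pose proof (ustar'_neg n r Hr) as HA.
  set (U := ustar n r) in *. set (A := ustar' n r) in *. set (U2 := ustar'' n r) in *.
  set (V := vr n lam Cv r) in *. set (B := vr' n lam Cv r) in *. set (V2 := vr'' n lam Cv r) in *.
  set (N := INR n) in *.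
  assert (X : (U2 - th * V2) + (N - 1) / r * (A - th * B) + (U - th * V) * (A - th * B) ^ 3
     - lam ^ 2 * th * V =
     (3 * ((U * A) * (th * B * (th * B))) + (- U) * (th * B * (th * B) * (th * B))
       + 3 * (th * V * (A * A) * (th * B)) + 3 * (th * V * (- A) * (th * B * (th * B)))
       + th * V * (th * B * (th * B) * (th * B)))
     + (U2 + (N - 1) / r * A + U * A ^ 3)
     - th * (V2 + (4 - 2 * N) / r * B - (3 * N - 5) / (9 * (r * r)) * V + lam * lam * V)
     - 3 * (th * B) * (U * A ^ 2 - - (3 * N - 5) / (3 * r))
     - th * V * (A ^ 3 - - (3 * N - 5) / (9 * (r * r)))) by (field; lra).
  rewrite h1, h2, h3, h4 in X.
  assert (Hb : 0 <= th * B) by (apply Rmult_le_pos; lra).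
  assert (Hc : 0 <= th * V) by (apply Rmult_le_pos; lra).
  set (b := th * B) in *. set (c := th * V) in *. clearbody b c.
  assert (0 <= U * A) by nra.
  assert (0 <= (U * A) * (b * b)) by (apply Rmult_le_pos; nra).
  assert (0 <= (- U) * (b * b * b)) by (apply Rmult_le_pos; [lra | repeat apply Rmult_le_pos; lra]).
  assert (0 <= c * (A * A) * b) by (apply Rmult_le_pos; [apply Rmult_le_pos; nra | lra]).
  assert (0 <= c * (- A) * (b * b)) by (apply Rmult_le_pos; [apply Rmult_le_pos | ]; nra).
  assert (0 <= c * (b * b * b)) by (apply Rmult_le_pos; [lra | repeat apply Rmult_le_pos; lra]).
  lra.
Qed.

Section ApproximateSolution.
Variables (n : nat) (R0 x1 lam Cv eps cst beta : R) (f : R -> R) (u ur urr ut : R -> R -> R).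
Hypotheses (Hn : (2 <= n)%nat) (Hx1 : 0 < x1) (Hlam : 0 < lam) (HlamR : lam * R0 < x1)
  (HCv : 0 < Cv) (Heps : 0 < eps < R0) (Hbeta : 0 < beta).
Hypothesis HJ' : forall y, 0 < y < x1 ->
  exists d, d <> 0 /\ derivable_pt_lim (BesselJ (nu n)) y d.
Hypothesis Hcst_ustar : forall r d, eps <= r <= R0 ->
  derivable_pt_lim (ustar n) r d -> cst > Rabs d.
Hypothesis Hcst_sub : forall r d, eps <= r <= R0 ->
  derivable_pt_lim (fun s => ustar n s - vfun n lam Cv s 0) r d -> cst > Rabs d.
Hypothesis Hf : forall s, Rabs s <= cst -> f s = s ^ 3.
Hypothesis Hu_holder : holder2 (fun r t => eps <= r <= R0 /\ 0 <= t) beta u.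
Hypothesis Hu_deriv : forall r t, eps < r < R0 -> 0 < t ->
  derivable_pt_lim (fun s => u s t) r (ur r t) /\
  derivable_pt_lim (fun s => ur s t) r (urr r t) /\
  derivable_pt_lim (fun s => u r s) t (ut r t).
Hypothesis Hpde : forall r t, eps < r < R0 -> 0 < t ->
  ut r t = urr r t + (INR n - 1) / r * ur r t + u r t * f (ur r t).
Hypothesis Hbc_eps : forall t, 0 < t -> u eps t = ustar n eps - vfun n lam Cv eps t.
Hypothesis Hbc_R0 : forall t, 0 < t -> u R0 t = ustar n R0.
Hypothesis Hinit : forall r, eps <= r <= R0 ->
  ustar n r >= u r 0 /\ u r 0 >= ustar n r - vfun n lam Cv r 0.

Let E t := exp (- lam ^ 2 * t).

Lemma vr_vr'_pos_on r : eps <= r <= R0 -> 0 < vr n lam Cv r /\ 0 < vr' n lam Cv r.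
Proof.
  intros Hr. apply (vr_vr'_pos n Hn lam Cv Hlam x1 Hx1 HCv HJ'); [lra|].
  apply Rle_lt_trans with (lam * R0); [apply Rmult_le_compat_l|]; lra.
Qed.

Lemma vfun_nonneg r t : eps <= r <= R0 -> 0 <= vfun n lam Cv r t.
Proof.
  intros Hr. rewrite (vfun_eq n Hn lam Cv Hlam) by lra. pose proof (vr_vr'_pos_on r Hr).
  apply Rmult_le_pos; [left; apply exp_pos | lra].
Qed.

Lemma u_unif_cont T : unif_cont_rect eps R0 0 T u.
Proof. apply (holder2_unif_cont_rect eps R0 0 T beta u Hbeta Hu_holder). Qed.

Lemma approx_le_ustar r t : eps < r < R0 -> 0 < t -> ustar n r >= u r t.
Proof.
  intros Hr Ht.
  apply (supersolution_ge (INR n - 1) eps R0 cst t f u ur urr ut ltac:(lra) Ht Hf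
    (u_unif_cont t)) with (phi := fun r _ => ustar n r) (phir := fun r _ => ustar' n r)
    (phirr := fun r _ => ustar'' n r) (phit := fun _ _ => 0); try lra.
  - intros s y Hs Hy. apply Hu_deriv; lra.
  - intros s y Hs Hy. apply Hpde; lra.
  - apply unif_cont_rect_fst. intros s Hs. apply continuity_pt_ustar; lra.
  - intros s y Hs _. repeat split;
      [apply derivable_pt_lim_ustar | apply derivable_pt_lim_ustar' | apply derivable_pt_lim_const];
      lra.
  - intros s y Hs _. left. apply Rgt_lt, (Hcst_ustar s); [lra|]. apply derivable_pt_lim_ustar; lra.
  - intros s y Hs _. rewrite (ustar_ode n Hn s) by lra. lra.
  - intros y Hy. destruct (Req_dec y 0) as [->|Hy0]; [split; apply Hinit; lra|].
    rewrite Hbc_eps, Hbc_R0 by lra. pose proof (vfun_nonneg eps y ltac:(lra)). lra.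
  - intros s Hs. apply Hinit; lra.
Qed.

Lemma exp_decay_bounds y : 0 <= y -> 0 < E y <= 1.
Proof.
  intros Hy. split; [apply exp_pos|]. unfold E. rewrite <- exp_0.
  destruct (Req_dec y 0) as [->|Hy0]; [rewrite Rmult_0_r; lra|].
  left; apply exp_increasing. pose proof (pow_lt lam 2 Hlam). nra.
Qed.

Lemma vfun_unif_cont T : 0 <= T -> unif_cont_rect eps R0 0 T (vfun n lam Cv).
Proof.
  intros HT. apply unif_cont_rect_ext with (fun s y => E y * vr n lam Cv s);
    [| intros s y Hs Hy; symmetry; apply vfun_eq; auto; lra].
  apply unif_cont_rect_mult; [lra | lra | apply unif_cont_rect_snd | apply unif_cont_rect_fst];
    intros x Hx.
  - exact (derivable_pt_lim_continuity_pt _ _ _ (derivable_pt_lim_exp_scal _ x)).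
  - exact (derivable_pt_lim_continuity_pt _ _ _ (derivable_pt_lim_vr n Hn lam Cv Hlam x ltac:(lra))).
Qed.

(* The gradient of [ustar - vfun] at time [y] lies between those of [ustar] and
   [ustar - vfun (., 0)], both bounded by [cst]. *)
Lemma sub_gradient_bound s y : eps < s < R0 -> 0 <= y ->
  Rabs (ustar' n s - E y * vr' n lam Cv s) <= cst.
Proof.
  intros Hs Hy.
  destruct (vr_vr'_pos_on s ltac:(lra)) as [_ HB]. destruct (exp_decay_bounds y Hy).
  assert (Hb : 0 <= E y * vr' n lam Cv s <= vr' n lam Cv s) by (split; nra).
  assert (HA := Hcst_ustar s _ ltac:(lra) (derivable_pt_lim_ustar n s ltac:(lra))).
  assert (HAB : cst > Rabs (ustar' n s - vr' n lam Cv s)).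
  { apply (Hcst_sub s); [lra|].
    apply derivable_pt_lim_minus'; [apply derivable_pt_lim_ustar; lra|].
    apply derivable_pt_lim_eq with (exp (- lam ^ 2 * 0) * vr' n lam Cv s);
      [rewrite Rmult_0_r, exp_0; ring | apply derivable_pt_lim_vfun_r; auto; lra]. }
  revert HA HAB Hb. unfold Rabs; repeat destruct Rcase_abs; lra.
Qed.

Lemma approx_ge_ustar_sub_vfun r t : eps < r < R0 -> 0 < t ->
  u r t >= ustar n r - vfun n lam Cv r t.
Proof.
  intros Hr Ht.
  apply (subsolution_le (INR n - 1) eps R0 cst t f u ur urr ut ltac:(lra) Ht Hf (u_unif_cont t))
    with (phi := fun s y => ustar n s - vfun n lam Cv s y)
    (phir := fun s y => ustar' n s - E y * vr' n lam Cv s)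
    (phirr := fun s y => ustar'' n s - E y * vr'' n lam Cv s)
    (phit := fun s y => lam ^ 2 * E y * vr n lam Cv s); try lra.
  - intros s y Hs Hy. apply Hu_deriv; lra.
  - intros s y Hs Hy. apply Hpde; lra.
  - apply unif_cont_rect_minus; [|apply vfun_unif_cont; lra].
    apply unif_cont_rect_fst; intros s Hs; apply continuity_pt_ustar; lra.
  - intros s y Hs Hy. repeat split.
    + apply derivable_pt_lim_minus';
        [apply derivable_pt_lim_ustar | apply derivable_pt_lim_vfun_r]; auto; lra.
    + apply derivable_pt_lim_minus';
        [apply derivable_pt_lim_ustar' | apply derivable_pt_lim_scal', derivable_pt_lim_vr'];
        auto; lra.
    + apply derivable_pt_lim_eq with (0 - - lam ^ 2 * E y * vr n lam Cv s); [ring|].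
      apply derivable_pt_lim_minus';
        [apply derivable_pt_lim_const | apply derivable_pt_lim_vfun_t]; auto; lra.
  - intros s y Hs Hy. apply sub_gradient_bound; lra.
  - intros s y Hs Hy. rewrite (vfun_eq n Hn lam Cv Hlam) by lra.
    change (exp (- lam ^ 2 * y)) with (E y).
    destruct (vr_vr'_pos_on s ltac:(lra)) as [HV HB].
    pose proof (ustar_sub_vr_subsolution n lam Cv s (E y) Hn Hlam ltac:(lra)
      (proj1 (exp_decay_bounds y ltac:(lra))) ltac:(lra) ltac:(lra)).
    lra.
  - intros y Hy. destruct (Req_dec y 0) as [->|Hy0]; [split; apply Hinit; lra|].
    rewrite Hbc_eps, Hbc_R0 by lra. pose proof (vfun_nonneg R0 y ltac:(lra)). lra.
  - intros s Hs. apply Hinit; lra.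
Qed.

End ApproximateSolution.

Theorem mainTheorem13
  (n : nat) (R0 : R)
  (Hn : (2 <= n)%nat)
  (HR0 : 0 < R0)
  (HR1 : R0 < sqrt (3 / 8 * (3 * INR n - 5) * (2 * INR n - 3) ^ 3))
  (* u0 (radial profile on (0,R0]) with first and second radial derivatives *)
  (u0 u0r u0rr : R -> R)
  (C1a : forall r, 0 < r < R0 -> derivable_pt_lim u0 r (u0r r))
  (C1b : forall r, 0 < r < R0 -> derivable_pt_lim u0r r (u0rr r))
  (C1c : cont_on (fun r => 0 < r <= R0) u0)
  (C1d : cont_on (fun r => 0 < r <= R0) u0r)
  (C1e : cont_on (fun r => 0 < r <= R0) u0rr)
  (C3 : forall r, 0 < r <= R0 -> ustar n r >= u0 r)
  (C4 : exists M d, 0 < d /\ forall r, 0 < r < d ->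
          Rabs (pw r (3 / 2 - INR n - nu n) * (ustar n r - u0 r)) <= M)
  (C5 : u0 R0 = ustar n R0)
  (C6 : exists C, 0 < C /\ forall r, 0 < r < R0 ->
          0 >= u0r r /\ u0r r >= - C * pw r (- (2 / 3)))
  (* lam, C with lam * R0 < x1, x1 = first positive root of J_nu' *)
  (x1 lam Cv : R)
  (Hx1a : 0 < x1)
  (Hx1b : derivable_pt_lim (BesselJ (nu n)) x1 0)
  (Hx1c : forall y, 0 < y < x1 ->
          exists d, d <> 0 /\ derivable_pt_lim (BesselJ (nu n)) y d)
  (Hlam : 0 < lam) (HlamR : lam * R0 < x1)
  (HCv : 0 < Cv)
  (Hv0 : forall r, 0 < r < R0 -> u0 r >= ustar n r - vfun n lam Cv r 0)
  (* epsilon and the approximate initial datum u0e *)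
  (eps : R) (Heps : 0 < eps < R0)
  (u0e u0er u0err : R -> R)
  (Hu0e1 : forall r, eps < r < R0 -> derivable_pt_lim u0e r (u0er r))
  (Hu0e2 : forall r, eps < r < R0 -> derivable_pt_lim u0er r (u0err r))
  (Hu0e3 : cont_on (fun r => eps <= r <= R0) u0e)
  (Hu0e4 : cont_on (fun r => eps <= r <= R0) u0er)
  (Hu0e5 : cont_on (fun r => eps <= r <= R0) u0err)
  (Hu0e6 : u0e eps = ustar n eps - vfun n lam Cv eps 0)
  (Hu0e7 : forall r, eps < r < R0 -> u0r r <= u0er r /\ u0er r <= 0)
  (Hu0e8 : forall r, eps <= r <= R0 ->
           ustar n r >= u0e r /\ u0e r >= ustar n r - vfun n lam Cv r 0)
  (Hu0e9 : forall r, eps < r <= R0 ->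
           u0 r < ustar n eps - vfun n lam Cv eps 0 - eps -> u0e r = u0 r)
  (* the constant c*_eps *)
  (cst : R)
  (Hc1 : cst > 1)
  (Hc2 : forall r d, eps <= r <= R0 -> derivable_pt_lim (ustar n) r d -> cst > Rabs d)
  (Hc3 : forall r d, eps <= r <= R0 ->
         derivable_pt_lim (fun s => ustar n s - vfun n lam Cv s 0) r d -> cst > Rabs d)
  (Hc4 : forall r, eps <= r <= R0 -> cst > Rabs (u0er r))
  (Hc5 : - vfun n lam Cv eps 0 + (INR n - 1) / eps * cst + ustar n eps * cst ^ 3 <= 0)
  (* the nonlinearity f_eps *)
  (f : R -> R)
  (Hf1 : smooth f)
  (Hf2 : exists M, forall s, Rabs s > M -> f s = 0)
  (Hf3 : forall s, Rabs s <= cst -> f s = s ^ 3)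
  (Hf4 : forall s, s < 0 -> f s <= 0)
  (* the approximate solution u_eps (radial profile) and its derivatives *)
  (u ur urr ut : R -> R -> R)
  (beta : R) (Hbeta : 0 < beta < 1)
  (Hu1 : holder2 (fun r t => eps <= r <= R0 /\ 0 <= t) beta u)
  (Hu2 : forall r t, eps < r < R0 -> 0 < t ->
         derivable_pt_lim (fun s => u s t) r (ur r t) /\
         derivable_pt_lim (fun s => ur s t) r (urr r t) /\
         derivable_pt_lim (fun s => u r s) t (ut r t))
  (Hu3 : cont_on2 (fun r t => eps < r < R0 /\ 0 < t) ur)
  (Hu4 : forall a b t1 t2, eps < a -> b < R0 -> 0 < t1 ->
         holder2 (fun r t => a <= r <= b /\ t1 <= t <= t2) beta urr /\
         holder2 (fun r t => a <= r <= b /\ t1 <= t <= t2) beta ut)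
  (Hu5 : forall T, exists K, forall r t, eps < r < R0 -> 0 < t <= T ->
         Rabs (ur r t) <= K)
  (Hpde : forall r t, eps < r < R0 -> 0 < t ->
          ut r t = urr r t + (INR n - 1) / r * ur r t + u r t * f (ur r t))
  (Hbc1 : forall t, 0 < t -> u eps t = ustar n eps - vfun n lam Cv eps t)
  (Hbc2 : forall t, 0 < t -> u R0 t = ustar n R0)
  (Hic : forall r, eps <= r <= R0 -> u r 0 = u0e r) :
  forall r t, eps < r < R0 -> 0 < t ->
    ustar n r >= u r t /\ u r t >= ustar n r - vfun n lam Cv r t.
Proof.
  intros r t Hr Ht.
  assert (Hinit : forall s, eps <= s <= R0 ->
    ustar n s >= u s 0 /\ u s 0 >= ustar n s - vfun n lam Cv s 0)
    by (intros s Hs; rewrite Hic by exact Hs; apply Hu0e8, Hs).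
  split.
  - apply (approx_le_ustar n R0 x1 lam Cv eps cst beta f u ur urr ut); auto; lra.
  - apply (approx_ge_ustar_sub_vfun n R0 x1 lam Cv eps cst beta f u ur urr ut); auto; lra.
Qed.
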